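(* In the setting described in the context, suppose that the closed-loop system $\Sigma_0$ is UGES. Then there exists $\delta^\star>0$ such that the sampled-data system $\Sigma$ is UGES whenever the maximal sampling time $\delta=\sup_{k\ge0}(s_{k+1}-s_k)$ of the sampling sequence is smaller than $\delta^\star$.
   Context: $X,U$ are Banach spaces. $A$ is the infinitesimal generator of a $C_0$-group $(T_t)_{t\in\mathbb{R}}$ of bounded linear operators on $X$. $\mathcal{Q}$ is a nonempty set, $\mathrm{PC}$ the set of piecewise constant $\sigma:\mathbb{R}_+\to\mathcal{Q}$. For $q\in\mathcal{Q}$, $f_q:X\times U\to X$ is Lipschitz with constant $L_f>0$ independent of $q$ and $f_q(0,0)=0$; $K:X\to U$ is globally Lipschitz with $K(0)=0$. Closed-loop system $\Sigma_0$: for $q\in\mathcal{Q}$, $T_q(t)x_0$ is the mild solution $x(t)=T_tx_0+\int_0^tT_{t-s}f_q(x(s),K(x(s)))ds$, and for $\sigma\in\mathrm{PC}$ equal to $q_k$ on $[t_k,t_{k+1})$ ($0=t_0<t_1<\cdots\to\infty$), $\phi^{\Sigma_0}(t,x_0,\sigma)=T_{q_k}(t-t_k)\cdots T_{q_0}(t_1)x_0$ for $t\in[t_k,t_{k+1})$. Sampled-data system $\Sigma$: given sampling instants $s_0=0<s_1<\cdots$ with $s_k\to\infty$, $\phi^\Sigma(t,x_0,\sigma)=x^\Sigma(t)$, where $x^\Sigma$ is the unique continuous function with $x^\Sigma(0)=x_0$ and, for $k\ge0$, $s_k\le t<s_{k+1}$, $x^\Sigma(t)=T_{t-s_k}x^\Sigma(s_k)+\int_0^{t-s_k}T_{t-s_k-s}f_{\sigma(s+s_k)}(x^\Sigma(s+s_k),K(T_sx^\Sigma(s_k)))ds$.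 A system with transition map $\phi$ is UGES if there exist $M,\lambda>0$ with $\|\phi(t,x,\sigma)\|\le Me^{-\lambda t}\|x\|$ for all $t\ge0$, $x\in X$, $\sigma\in\mathrm{PC}$. *)

From Stdlib Require Import Reals.
From Coquelicot Require Import Coquelicot.
Open Scope R_scope.

Section Defs.
Context {X : NormedModule R_AbsRing}.

Definition bounded_linear (L : X -> X) : Prop :=
  (forall x y, L (plus x y) = plus (L x) (L y)) /\
  (forall (a : R) x, L (scal a x) = scal a (L x)) /\
  (exists C : R, forall x, norm (L x) <= C * norm x).

Definition C0_group (T : R -> X -> X) : Prop :=
  (forall t, bounded_linear (T t)) /\
  (forall x, T 0 x = x) /\
  (forall s t x, T (s + t) x = T s (T t x)) /\
  (forall x, filterlim (fun t => T t x) (locally 0) (locally x)).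

Definition continuous_on_Rplus (x : R -> X) : Prop :=
  forall t, 0 <= t -> filterlim x (within (fun u => 0 <= u) (locally t)) (locally (x t)).
End Defs.

Definition increasing_unbounded_from0 (ts : nat -> R) : Prop :=
  ts 0%nat = 0 /\ (forall k, ts k < ts (S k)) /\ (forall B, exists k, B < ts k).

Definition switching_seq {Q : Type} (sigma : R -> Q) (ts : nat -> R) : Prop :=
  increasing_unbounded_from0 ts /\
  (forall k t, ts k <= t < ts (S k) -> sigma t = sigma (ts k)).

Definition PC {Q : Type} (sigma : R -> Q) : Prop := exists ts, switching_seq sigma ts.

Definition sampling_seq (s : nat -> R) : Prop := increasing_unbounded_from0 s.

Definition globally_lipschitz {X U : NormedModule R_AbsRing} (K : X -> U) : Prop :=
  exists LK : R, forall x y, norm (minus (K x) (K y)) <= LK * norm (minus x y).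

(* x is the trajectory phi^{Sigma_0}(., x0, sigma) w.r.t. the switching
   sequence ts of sigma: on [t_k, t_{k+1}] it is the mild solution of mode
   q_k = sigma(t_k) started at x(t_k), i.e. x(t) = T_{q_k}(t - t_k) x(t_k). *)
Definition closed_loop_traj {X U : NormedModule R_AbsRing} {Q : Type}
  (T : R -> X -> X) (f : Q -> X -> U -> X) (K : X -> U)
  (sigma : R -> Q) (ts : nat -> R) (x0 : X) (x : R -> X) : Prop :=
  x 0 = x0 /\
  forall k t, ts k <= t <= ts (S k) ->
    exists I : X,
      is_RInt (fun r => T (t - ts k - r) (f (sigma (ts k)) (x (ts k + r)) (K (x (ts k + r)))))
              0 (t - ts k) I /\
      x t = plus (T (t - ts k) (x (ts k))) I.

Definition Sigma0_traj {X U : NormedModule R_AbsRing} {Q : Type}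
  (T : R -> X -> X) (f : Q -> X -> U -> X) (K : X -> U)
  (sigma : R -> Q) (x0 : X) (x : R -> X) : Prop :=
  exists ts, switching_seq sigma ts /\ closed_loop_traj T f K sigma ts x0 x.

Definition sampled_traj {X U : NormedModule R_AbsRing} {Q : Type}
  (T : R -> X -> X) (f : Q -> X -> U -> X) (K : X -> U) (s : nat -> R)
  (sigma : R -> Q) (x0 : X) (x : R -> X) : Prop :=
  x 0 = x0 /\ continuous_on_Rplus x /\
  forall k t, s k <= t < s (S k) ->
    exists I : X,
      is_RInt (fun r => T (t - s k - r) (f (sigma (r + s k)) (x (r + s k)) (K (T r (x (s k))))))
              0 (t - s k) I /\
      x t = plus (T (t - s k) (x (s k))) I.

Definition UGES {X : NormedModule R_AbsRing} {Q : Type}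
  (traj : (R -> Q) -> X -> (R -> X) -> Prop) : Prop :=
  exists M lam : R, 0 < M /\ 0 < lam /\
    forall (sigma : R -> Q) (x0 : X) (x : R -> X), PC sigma -> traj sigma x0 x ->
      forall t, 0 <= t -> norm (x t) <= M * exp (- lam * t) * norm x0.

From Stdlib Require Import Reals Lra Lia Classical ClassicalEpsilon.
From Coquelicot Require Import Coquelicot.
Open Scope R_scope.

(* Write [V t := T (-t) (x t)] for a trajectory [x]. By variation of constants, [V t - x 0] is
   the integral of [T (-r)] applied to the right-hand side, for [Sigma0] and for the sampled
   system alike. On the horizon [tau + 1] the group is uniformly bounded (uniform boundedness
   principle), so Gronwall's inequality bounds the sampled trajectory by [Cx |x0|], the
   sample-and-hold error [x r - T (r - s_k) (x s_k)] by [delta c1 |x0|], and then the distance to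
   the trajectory of [Sigma0] with the same data (built by Picard iteration) by [delta c2 |x0|].
   With [M exp (-lam tau) <= 1/4] and [delta c2 <= 1/4], the norm has halved at the first
   sampling instant after [tau]; a sampled trajectory restarted there is again one, and iterating
   gives exponential decay. *)

Section NormFacts.
Context {V : NormedModule R_AbsRing}.

(* Coquelicot's [AbelianGroup] lemmas involving [plus] are found by [rewrite] only when
   instantiated at this structure. *)
Notation AG := (NormedModule.AbelianGroup R_AbsRing V).

Lemma minus_plus_l (a b : V) : minus (plus a b) a = b.
Proof.
  unfold minus. rewrite (plus_comm a b), <- plus_assoc, (@plus_opp_r AG). apply plus_zero_r.
Qed.

Lemma plus_minus_r (a b : V) : plus a (minus b a) = b.
Proof.
  rewrite plus_comm. unfold minus. rewrite <- plus_assoc, (@plus_opp_l AG). apply plus_zero_r.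
Qed.

Lemma plus_minus_chain (a b c : V) : plus (minus b a) (minus c b) = minus c a.
Proof. rewrite plus_comm. symmetry. apply minus_trans. Qed.

Lemma minus_minus_r (a b c : V) : minus (minus a c) (minus b c) = minus a b.
Proof. unfold minus at 1. rewrite opp_minus, plus_comm. apply plus_minus_chain. Qed.

Lemma minus_plus_plus (a b c d : V) :
  minus (plus a b) (plus c d) = plus (minus a c) (minus b d).
Proof.
  unfold minus. rewrite (@opp_plus AG), <- !plus_assoc. f_equal.
  rewrite plus_comm, <- plus_assoc. f_equal. apply plus_comm.
Qed.

Lemma minus_plus_cancel_l (c u v : V) : minus (plus c u) (plus c v) = minus u v.
Proof. rewrite minus_plus_plus, minus_eq_zero. apply plus_zero_l. Qed.

Lemma plus_minus_swap (a b c : V) : plus (minus a c) b = minus (plus a b) c.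
Proof. unfold minus. rewrite <- !plus_assoc. f_equal. apply plus_comm. Qed.

(* [minus_zero_r] for the [zero] of the normed module, which [rewrite] does not match. *)
Lemma nm_minus_zero_r (a : V) : minus a (@zero (NormedModule.AbelianMonoid R_AbsRing V)) = a.
Proof. exact (minus_zero_r a). Qed.

Lemma minus_zero_eq (a b : V) : minus a b = zero -> a = b.
Proof. intros H. rewrite <- (plus_minus_r b a), H. apply plus_zero_r. Qed.

Lemma norm_minus_sym (a b : V) : norm (minus a b) = norm (minus b a).
Proof. rewrite <- opp_minus. apply norm_opp. Qed.

Lemma norm_minus_triangle (a b c : V) :
  norm (minus a c) <= norm (minus a b) + norm (minus b c).
Proof. rewrite (minus_trans b). apply norm_triangle. Qed.

Lemma norm_minus_le (a b : V) : norm (minus a b) <= norm a + norm b.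
Proof. unfold minus. rewrite <- (norm_opp b). apply norm_triangle. Qed.

Lemma norm_minus_ge (a b : V) : norm a - norm b <= norm (minus a b).
Proof. generalize (norm_triangle_inv a b) (Rle_abs (norm a - norm b)). lra. Qed.

Lemma norm_minus_diag (a : V) : norm (minus a a) = 0.
Proof. rewrite minus_eq_zero. apply norm_zero. Qed.

Lemma eq_of_norm_minus_small (a b : V) :
  (forall eps, 0 < eps -> norm (minus a b) < eps) -> a = b.
Proof.
  intros H. apply minus_zero_eq, norm_eq_zero.
  destruct (norm_ge_0 (minus a b)) as [Hp|Hz]; [|auto].
  specialize (H _ Hp). lra.
Qed.

Lemma norm_scal_R (l : R) (x : V) : norm (scal l x) = Rabs l * norm x.
Proof.
  apply Rle_antisym; [exact (norm_scal l x)|].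
  destruct (Req_dec l 0) as [->|Hl].
  - rewrite Rabs_R0, Rmult_0_l. apply norm_ge_0.
  - assert (Ex : x = scal (/ l) (scal l x)).
    { rewrite scal_assoc. replace (mult (/ l) l) with 1 by (unfold mult; simpl; field; auto).
      symmetry. exact (@scal_one _ (NormedModule.ModuleSpace R_AbsRing V) x). }
    assert (Hx : norm x <= Rabs (/ l) * norm (scal l x)).
    { rewrite Ex at 1. exact (norm_scal (/ l) (scal l x)). }
    rewrite Rabs_inv in Hx. assert (0 < Rabs l) by (apply Rabs_pos_lt; auto).
    apply (Rmult_le_compat_l (Rabs l)) in Hx; [|lra].
    rewrite <- Rmult_assoc, Rinv_r, Rmult_1_l in Hx; lra.
Qed.

Lemma filterlim_seq_normP (u : nat -> V) (l : V) :
  filterlim u eventually (locally l) <->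
  forall eps, 0 < eps -> exists N, forall n, (N <= n)%nat -> norm (minus (u n) l) < eps.
Proof.
  split.
  - intros H eps He. exact (proj1 (filterlim_locally_ball_norm _ _) H (mkposreal eps He)).
  - intros H. apply filterlim_locally_ball_norm. intros eps. exact (H eps (cond_pos eps)).
Qed.

Lemma seq_lim_unique (u : nat -> V) l1 l2 :
  filterlim u eventually (locally l1) -> filterlim u eventually (locally l2) -> l1 = l2.
Proof.
  exact (filterlim_locally_unique (F := eventually)
           (FF := Proper_StrongProper _ eventually_filter) u l1 l2).
Qed.

Lemma continuous_normP (f : R -> V) (a : R) :
  continuous f a <->
  forall eps, 0 < eps -> exists d, 0 < d /\
    forall y, Rabs (y - a) < d -> norm (minus (f y) (f a)) < eps.
Proof.
  split.
  - intros Hf eps He.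
    destruct (proj1 (filterlim_locally_ball_norm _ _) Hf (mkposreal eps He)) as [d Hd].
    exists d. split; [apply cond_pos|]. intros y Hy. exact (Hd y Hy).
  - intros H. apply filterlim_locally_ball_norm. intros eps.
    destruct (H eps (cond_pos eps)) as [d [Hd Hf]].
    exists (mkposreal d Hd). intros y Hy. exact (Hf y Hy).
Qed.

End NormFacts.

Lemma norm_lipschitz_zero {V W : NormedModule R_AbsRing} (F : V -> W) (L : R) (x : V) :
  (forall u v, norm (minus (F u) (F v)) <= L * norm (minus u v)) -> F zero = zero ->
  norm (F x) <= L * norm x.
Proof. intros HF H0. generalize (HF x zero). rewrite H0, !nm_minus_zero_r. auto. Qed.

Section BoundedLinear.
Context {X : NormedModule R_AbsRing} (L : X -> X) (HL : bounded_linear L).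

Lemma bounded_linear_opp x : L (opp x) = opp (L x).
Proof.
  destruct HL as [_ [Hs _]].
  rewrite <- !(@scal_opp_one _ (NormedModule.ModuleSpace R_AbsRing X)). apply Hs.
Qed.

Lemma bounded_linear_minus x y : L (minus x y) = minus (L x) (L y).
Proof. unfold minus. rewrite (proj1 HL). f_equal. apply bounded_linear_opp. Qed.

Lemma bounded_linear_zero : L zero = zero.
Proof.
  assert (E : forall y : X, scal 0 y = zero)
    by (intros; exact (@scal_zero_l _ (NormedModule.ModuleSpace R_AbsRing X) y)).
  rewrite <- (E zero) at 1. rewrite (proj1 (proj2 HL)). apply E.
Qed.

Lemma bounded_linear_bound : exists C, 0 < C /\ forall x, norm (L x) <= C * norm x.
Proof.
  destruct HL as [_ [_ [C HC]]]. exists (Rmax C 1). split; [generalize (Rmax_r C 1); lra|].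
  intros x. eapply Rle_trans; [apply HC|].
  apply Rmult_le_compat_r; [apply norm_ge_0 | apply Rmax_l].
Qed.

Lemma Riemann_sum_bounded_linear (g : R -> X) ptd :
  Riemann_sum (fun r => L (g r)) ptd = L (Riemann_sum g ptd).
Proof.
  induction ptd using SF_cons_ind.
  - symmetry. apply bounded_linear_zero.
  - rewrite !Riemann_sum_cons, IHptd, (proj1 HL). f_equal. symmetry. apply (proj1 (proj2 HL)).
Qed.

End BoundedLinear.

Section Continuity.

Lemma continuous_lipschitz {V W : NormedModule R_AbsRing} (F : V -> W) (L : R) :
  (forall u v, norm (minus (F u) (F v)) <= L * norm (minus u v)) -> forall x, continuous F x.
Proof.
  intros HF x. apply filterlim_locally_ball_norm. intros eps.
  set (L' := Rmax L 1). assert (HL' : 1 <= L') by apply Rmax_r.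
  assert (Hd : 0 < eps / L') by (apply Rdiv_lt_0_compat; [apply cond_pos | lra]).
  apply (filter_imp (ball_norm x (mkposreal _ Hd))); [|apply locally_ball_norm].
  intros y Hy. unfold ball_norm in *. simpl in Hy.
  apply Rle_lt_trans with (L' * norm (minus y x)).
  - eapply Rle_trans; [apply HF|]. apply Rmult_le_compat_r; [apply norm_ge_0 | apply Rmax_l].
  - replace (pos eps) with (L' * (eps / L')) by (field; lra). apply Rmult_lt_compat_l; lra.
Qed.

Lemma bounded_linear_continuous {X : NormedModule R_AbsRing} (L : X -> X) :
  bounded_linear L -> forall x, continuous L x.
Proof.
  intros HL. destruct (bounded_linear_bound L HL) as [C [_ HC]].
  apply (continuous_lipschitz L C). intros u v. rewrite <- bounded_linear_minus by auto. apply HC.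
Qed.

Lemma is_RInt_bounded_linear {X : NormedModule R_AbsRing} (L : X -> X) (g : R -> X) a b I :
  bounded_linear L -> is_RInt g a b I -> is_RInt (fun r => L (g r)) a b (L I).
Proof.
  intros HL Hg. eapply filterlim_ext;
    [|eapply filterlim_comp; [exact Hg | apply bounded_linear_continuous, HL]].
  intros ptd. simpl. rewrite Riemann_sum_bounded_linear by auto. apply (proj1 (proj2 HL)).
Qed.

Lemma continuous_lipschitz2 {V W Z : NormedModule R_AbsRing} (h : V -> W -> Z) (L : R)
  (g1 : R -> V) (g2 : R -> W) a :
  (forall u v u' v',
    norm (minus (h u v) (h u' v')) <= L * (norm (minus u u') + norm (minus v v'))) ->
  continuous g1 a -> continuous g2 a -> continuous (fun r => h (g1 r) (g2 r)) a.
Proof.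
  intros Hh H1 H2. apply continuous_normP. intros eps He.
  set (L' := Rmax L 1). assert (HL' : 1 <= L') by apply Rmax_r.
  assert (He' : 0 < eps / (2 * L')) by (apply Rdiv_lt_0_compat; lra).
  destruct (proj1 (continuous_normP _ _) H1 _ He') as [d1 [Hd1 Hd1']].
  destruct (proj1 (continuous_normP _ _) H2 _ He') as [d2 [Hd2 Hd2']].
  exists (Rmin d1 d2). split; [apply Rmin_pos; auto|]. intros y Hy.
  assert (A1 := Hd1' y (Rlt_le_trans _ _ _ Hy (Rmin_l _ _))).
  assert (A2 := Hd2' y (Rlt_le_trans _ _ _ Hy (Rmin_r _ _))).
  eapply Rle_lt_trans; [apply Hh|].
  apply Rle_lt_trans with (L' * (norm (minus (g1 y) (g1 a)) + norm (minus (g2 y) (g2 a)))).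
  - apply Rmult_le_compat_r; [|apply Rmax_l].
    generalize (norm_ge_0 (minus (g1 y) (g1 a))) (norm_ge_0 (minus (g2 y) (g2 a))). lra.
  - apply Rlt_le_trans with (L' * (eps / (2 * L') + eps / (2 * L'))).
    + apply Rmult_lt_compat_l; lra.
    + apply Req_le. field. lra.
Qed.

Lemma continuous_R_lipschitz (phi : R -> R) :
  (forall y z, Rabs (phi y - phi z) <= Rabs (y - z)) -> forall a, continuous phi a.
Proof. intros H. apply (continuous_lipschitz (V := R_NormedModule) (W := R_NormedModule) phi 1).
  intros u v. rewrite Rmult_1_l. apply H. Qed.

Definition clamp (a b y : R) : R := Rmax a (Rmin b y).

Lemma clamp_lipschitz a b y z : Rabs (clamp a b y - clamp a b z) <= Rabs (y - z).
Proof. unfold clamp, Rmax, Rmin.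
  repeat destruct Rle_dec; unfold Rabs; repeat destruct Rcase_abs; lra. Qed.

Lemma clamp_id a b y : a <= y <= b -> clamp a b y = y.
Proof. intros. unfold clamp, Rmax, Rmin. repeat destruct Rle_dec; lra. Qed.

Lemma clamp_range a b y : a <= b -> a <= clamp a b y <= b.
Proof. intros. unfold clamp, Rmax, Rmin. repeat destruct Rle_dec; lra. Qed.

Context {V : NormedModule R_AbsRing}.

Lemma continuous_left_eq (F1 F2 : R -> V) b c : c < b ->
  (forall y, c <= y < b -> F1 y = F2 y) -> continuous F1 b -> continuous F2 b -> F1 b = F2 b.
Proof.
  intros Hcb Heq H1 H2. apply eq_of_norm_minus_small. intros eps He.
  destruct (proj1 (continuous_normP _ _) H1 (eps / 2)) as [d1 [Hd1 Hd1']]; [lra|].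
  destruct (proj1 (continuous_normP _ _) H2 (eps / 2)) as [d2 [Hd2 Hd2']]; [lra|].
  assert (Hd : 0 < Rmin d1 d2) by (apply Rmin_pos; auto).
  set (y := Rmax c (b - Rmin d1 d2 / 2)).
  assert (Hy1 : c <= y < b) by (split; [apply Rmax_l | apply Rmax_lub_lt; lra]).
  assert (Hy2 : Rabs (y - b) < Rmin d1 d2).
  { rewrite Rabs_left by lra. unfold y. generalize (Rmax_r c (b - Rmin d1 d2 / 2)). lra. }
  eapply Rle_lt_trans; [apply (norm_minus_triangle _ (F1 y))|].
  rewrite (norm_minus_sym (F1 b)).
  generalize (Hd1' y (Rlt_le_trans _ _ _ Hy2 (Rmin_l _ _))) (Hd2' y (Rlt_le_trans _ _ _ Hy2
    (Rmin_r _ _))).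
  rewrite <- (Heq y Hy1). lra.
Qed.

Lemma continuous_on_Rplus_extend (x : R -> V) :
  continuous_on_Rplus x -> forall z, continuous (fun r => x (Rmax 0 r)) z.
Proof.
  intros Hx z. apply continuous_normP. intros eps He. destruct (Rlt_or_le z 0) as [Hz|Hz].
  - exists (- z). split; [lra|]. intros y Hy.
    rewrite (Rmax_left 0 y), (Rmax_left 0 z) by (unfold Rabs in Hy; destruct Rcase_abs in Hy; lra).
    rewrite norm_minus_diag. exact He.
  - destruct (proj1 (filterlim_locally_ball_norm _ _) (Hx z Hz) (mkposreal eps He)) as [d Hd].
    exists d. split; [apply cond_pos|]. intros y Hy. rewrite (Rmax_right 0 z) by lra.
    apply (Hd (Rmax 0 y)); [|apply Rmax_l].
    unfold Rmax; destruct Rle_dec; [exact Hy|].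
    change (Rabs (0 - z) < d). unfold Rabs in *; repeat destruct Rcase_abs; lra.
Qed.

End Continuity.

(* The development runs over a [NormedModule] satisfying the following three consequences of
   completeness, proved for [CompleteNormedModule] below: lemmas stated for [NormedModule] do not
   [rewrite] terms built with the [CompleteNormedModule] instances. *)
Definition seq_complete (X : NormedModule R_AbsRing) : Prop :=
  forall u : nat -> X,
  (forall eps, 0 < eps -> exists N, forall n m, (N <= n)%nat -> (N <= m)%nat ->
     norm (minus (u n) (u m)) < eps) ->
  exists l, filterlim u eventually (locally l).

Definition continuous_integrable (X : NormedModule R_AbsRing) : Prop :=
  forall (f : R -> X) a b, (forall z, continuous f z) -> ex_RInt f a b.

Definition RInt_unif_closed (X : NormedModule R_AbsRing) : Prop :=
  forall (fn : nat -> R -> X) (f : R -> X) a b (In : nat -> X),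
  (forall n, is_RInt (fn n) a b (In n)) ->
  (forall eps, 0 < eps -> exists N, forall n t,
    (N <= n)%nat -> norm (minus (fn n t) (f t)) < eps) ->
  exists I, is_RInt f a b I /\ filterlim In eventually (locally I).

Section Complete.
Context (X : CompleteNormedModule R_AbsRing).

Lemma complete_seq_complete : seq_complete X.
Proof.
  intros u Hu. set (F := filtermap u eventually).
  assert (FF : ProperFilter F) by (apply filtermap_proper_filter, eventually_filter).
  assert (Hc : cauchy F).
  { intros eps. destruct (Hu eps (cond_pos eps)) as [N HN]. exists (u N), N.
    intros n Hn. apply norm_compat1. apply HN; auto. }
  exists (lim F). intros P [eps HP]. exact (filter_imp _ _ HP (complete_cauchy F FF Hc eps)).
Qed.

Lemma complete_continuous_integrable : continuous_integrable X.
Proof. intros f a b Hf. apply ex_RInt_continuous. intros z _. apply Hf. Qed.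

Lemma complete_RInt_unif_closed : RInt_unif_closed X.
Proof.
  intros fn f a b In HI Hu.
  destruct (filterlim_RInt fn a b eventually eventually_filter f In HI) as [I [H1 H2]];
    [|exists I; split; auto].
  intros P [eps HP]. destruct (Hu eps (cond_pos eps)) as [N HN]. exists N. intros n Hn. apply HP.
  intros t. apply (@norm_compat1 R_AbsRing (CompleteNormedModule.NormedModule _ X)), HN, Hn.
Qed.

End Complete.

Lemma exp_le_compat x y : x <= y -> exp x <= exp y.
Proof. intros [H|H]; [left; apply exp_increasing, H | rewrite H; lra]. Qed.

Lemma inv_succ_lt (eps : R) : 0 < eps -> exists N : nat, 1 / (INR N + 1) < eps.
Proof.
  intros He. destruct (INR_unbounded (1 / eps)) as [N HN]. exists N.
  generalize (pos_INR N); intros HN0.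
  apply Rmult_lt_reg_r with (INR N + 1); [lra|]. unfold Rdiv. rewrite Rmult_1_l, Rinv_l by lra.
  apply Rmult_lt_reg_l with (/ eps); [apply Rinv_0_lt_compat; auto|].
  rewrite <- Rmult_assoc, Rinv_l, Rmult_1_r, Rmult_1_l by lra. unfold Rdiv in HN. lra.
Qed.

Lemma seq_bounded_of_eventually (u : nat -> R) (N : nat) (B : R) :
  (forall n, (N <= n)%nat -> u n <= B) -> exists B', forall n, u n <= B'.
Proof.
  revert B. induction N as [|N IH]; intros B HB; [exists B; intros n; apply HB; lia|].
  apply (IH (Rmax B (u N))). intros n Hn.
  destruct (Nat.eq_dec n N) as [->|Hne]; [apply Rmax_r|].
  eapply Rle_trans; [apply HB; lia | apply Rmax_l].
Qed.

Lemma half_pow_scaled_lt (K eps : R) : 0 <= K -> 0 < eps ->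
  exists N, forall n, (N <= n)%nat -> K * (1/2) ^ n < eps.
Proof.
  intros HK He.
  destruct (pow_lt_1_zero (1/2) ltac:(rewrite Rabs_pos_eq; lra) (eps / (K + 1))) as [N HN];
    [apply Rdiv_lt_0_compat; lra|].
  exists N. intros n Hn. specialize (HN n Hn). rewrite Rabs_pos_eq in HN by (apply pow_le; lra).
  apply Rle_lt_trans with ((K + 1) * (1/2) ^ n); [generalize (pow_le (1/2) n); nra|].
  apply Rmult_lt_reg_l with (/ (K + 1)); [apply Rinv_0_lt_compat; lra|].
  rewrite <- Rmult_assoc, Rinv_l, Rmult_1_l by lra. unfold Rdiv in HN. lra.
Qed.

Lemma is_RInt_exp_affine A k a s : 0 < k ->
  is_RInt (fun y => A * exp (k * (y - a))) a s (A / k * (exp (k * (s - a)) - 1)).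
Proof.
  intros Hk.
  replace (A / k * (exp (k * (s - a)) - 1))
    with (minus (A / k * exp (k * (s - a))) (A / k * exp (k * (a - a)))).
  - apply (is_RInt_derive (fun y => A / k * exp (k * (y - a)))).
    + intros x _. auto_derive; [auto|]. unfold Rminus. field. lra.
    + intros x _. apply (ex_derive_continuous (K := R_AbsRing) (V := R_NormedModule)).
      auto_derive. auto.
  - unfold minus, plus, opp; simpl. rewrite Rminus_diag, Rmult_0_r, exp_0. ring.
Qed.

(* Picard iteration for a linear integral inequality: each pass halves the excess over [a]. *)
Lemma gronwall_iteration (phi : R -> R) (H kap a P : R) : 0 < kap -> 0 <= a ->
  (forall t, 0 <= t <= H -> phi t <= P) ->
  (forall A, 0 <= A -> (forall r, 0 <= r <= H -> phi r <= A * exp (2 * kap * r)) ->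
     forall t, 0 <= t <= H -> phi t <= a + A * (exp (2 * kap * t) - 1) / 2) ->
  forall t, 0 <= t <= H -> phi t <= a * exp (2 * kap * t).
Proof.
  intros Hk Ha HP Hstep. set (P' := Rmax P 0). assert (HP' : 0 <= P') by apply Rmax_r.
  assert (Hexp : forall t, 0 <= t -> 1 <= exp (2 * kap * t))
    by (intros t Ht; generalize (exp_ineq1_le (2 * kap * t)); nra).
  assert (Hn : forall n t, 0 <= t <= H -> phi t <= (a + P' * (1/2) ^ n) * exp (2 * kap * t)).
  { induction n; intros t Ht.
    - simpl. generalize (Hexp t (proj1 Ht)) (HP t Ht) (Rmax_l P 0). fold P'. nra.
    - assert (HA : 0 <= a + P' * (1/2) ^ n) by (generalize (pow_le (1/2) n); nra).
      eapply Rle_trans; [apply (Hstep _ HA IHn t Ht)|].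
      generalize (Hexp t (proj1 Ht)) (pow_le (1/2) n). rewrite <- tech_pow_Rmult. nra. }
  intros t Ht. apply Rle_plus_epsilon. intros eps He.
  destruct (half_pow_scaled_lt (P' * exp (2 * kap * t)) eps) as [N HN];
    [generalize (exp_pos (2 * kap * t)); nra | exact He |].
  generalize (Hn N t Ht) (HN N (le_n N)). lra.
Qed.

Section UniformBoundedness.
Context {X : NormedModule R_AbsRing}.

Lemma bounded_linear_large_on_ball (A : X -> X) (x : X) (m rho : R) :
  bounded_linear A -> 0 < rho -> Rabs m + 1 < norm (A x) ->
  exists r : posreal, r <= rho /\ forall z, norm (minus z x) <= r -> m < norm (A z).
Proof.
  intros HA Hrho Hx. destruct (bounded_linear_bound A HA) as [C [HC HCb]].
  assert (Hr : 0 < Rmin rho (1 / C)) by (apply Rmin_pos; [lra | apply Rdiv_lt_0_compat; lra]).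
  exists (mkposreal _ Hr). split; [apply Rmin_l|]. intros z Hz. simpl in Hz.
  assert (Hdiff : norm (minus (A x) (A z)) <= 1).
  { rewrite norm_minus_sym, <- bounded_linear_minus by auto.
    eapply Rle_trans; [apply HCb|].
    apply Rle_trans with (C * (1 / C)); [apply Rmult_le_compat_l; [lra|] | right; field; lra].
    eapply Rle_trans; [exact Hz | apply Rmin_r]. }
  generalize (norm_minus_ge (A x) (A z)) (Rle_abs m). lra.
Qed.

Lemma unbounded_family_step (A : nat -> X -> X) :
  (forall n, bounded_linear (A n)) -> ~ (exists C, forall n x, norm (A n x) <= C * norm x) ->
  forall (c : X) (r : posreal) (m : R), exists p : X * posreal,
    snd p <= r / 4 /\ norm (minus (fst p) c) <= r / 2 /\
    forall z, norm (minus z (fst p)) <= snd p -> exists n, m < norm (A n z).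
Proof.
  intros HA Hunb c r m.
  set (C := 4 * (Rabs m + 1) / r).
  assert (HC : 0 < C) by (apply Rdiv_lt_0_compat; [generalize (Rabs_pos m); lra | apply cond_pos]).
  destruct (classic (exists n x, C * norm x < norm (A n x))) as [[n [x Hx]]|Hno];
    [|exfalso; apply Hunb; exists C; intros n x; apply Rnot_lt_le; intros H; apply Hno; eauto].
  assert (Hr4 : 0 < r / 4) by (generalize (cond_pos r); lra).
  assert (Hball : forall x', norm (minus x' c) <= r / 2 -> Rabs m + 1 < norm (A n x') ->
    exists p : X * posreal, snd p <= r / 4 /\ norm (minus (fst p) c) <= r / 2 /\
      forall z, norm (minus z (fst p)) <= snd p -> exists n, m < norm (A n z)).
  { intros x' Hx'c Hx'.
    destruct (bounded_linear_large_on_ball (A n) x' m (r / 4) (HA n) Hr4 Hx') as [r' [Hr' Hz]].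
    exists (x', r'). split; [|split]; auto. intros z Hzr. exists n. apply Hz, Hzr. }
  assert (Hnx : 0 < norm x).
  { destruct (norm_ge_0 x) as [H|H]; [auto|]. exfalso. symmetry in H. apply norm_eq_zero in H.
    subst x. rewrite (bounded_linear_zero (A n) (HA n)), norm_zero in Hx. lra. }
  set (l := r / (2 * norm x)).
  assert (Hl : 0 < l) by (apply Rdiv_lt_0_compat; [apply cond_pos | lra]).
  set (w := scal l x).
  assert (Hw : norm w = r / 2).
  { unfold w. rewrite norm_scal_R, Rabs_pos_eq by lra. unfold l. field. lra. }
  assert (HAw : 2 * (Rabs m + 1) < norm (A n w)).
  { unfold w. rewrite (proj1 (proj2 (HA n))), norm_scal_R, (Rabs_pos_eq l) by lra.
    apply Rle_lt_trans with (l * (C * norm x)); [|apply Rmult_lt_compat_l; lra].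
    right. unfold l, C. field. split; [apply Rgt_not_eq, cond_pos | lra]. }
  assert (Hsplit : norm (A n w) <= norm (A n (plus c w)) + norm (A n c)).
  { replace (A n w) with (minus (A n (plus c w)) (A n c)); [apply norm_minus_le|].
    rewrite <- bounded_linear_minus by auto. f_equal. apply minus_plus_l. }
  destruct (Rlt_or_le (Rabs m + 1) (norm (A n c))) as [Hc|Hc].
  - apply (Hball c); [rewrite norm_minus_diag; generalize (cond_pos r); lra | auto].
  - apply (Hball (plus c w)); [rewrite minus_plus_l; lra | lra].
Qed.

Lemma nested_balls_limit (HX : seq_complete X) (c : nat -> X) (r : nat -> R) :
  (forall k, 0 < r k) ->
  (forall k, r (S k) <= r k / 4 /\ norm (minus (c (S k)) (c k)) <= r k / 2) ->
  exists l, forall k, norm (minus l (c k)) <= r k.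
Proof.
  intros Hpos Hst.
  assert (Hsmall : forall k, r k <= r 0%nat * (1/2) ^ k).
  { induction k; [simpl; lra|]. destruct (Hst k) as [H1 _]. simpl. generalize (Hpos k). lra. }
  assert (Hdist : forall k d, norm (minus (c (k + d)%nat) (c k)) <= 2/3 * (r k - r (k + d)%nat)).
  { intros k d. induction d.
    - rewrite Nat.add_0_r, norm_minus_diag. lra.
    - replace (k + S d)%nat with (S (k + d)) by lia. destruct (Hst (k + d)%nat) as [H1 H2].
      eapply Rle_trans; [apply (norm_minus_triangle _ (c (k + d)%nat))|]. lra. }
  assert (Hd : forall k j, (k <= j)%nat -> norm (minus (c j) (c k)) <= 2/3 * r k).
  { intros k j Hkj. replace j with (k + (j - k))%nat by lia.
    eapply Rle_trans; [apply Hdist|]. generalize (Hpos (k + (j - k))%nat). lra. }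
  destruct (HX c) as [l Hl].
  { intros eps He. destruct (half_pow_scaled_lt (r 0%nat) (eps / 2)) as [N HN];
      [generalize (Hpos 0%nat); lra | lra |].
    exists N. intros n m Hn Hm.
    eapply Rle_lt_trans; [apply (norm_minus_triangle _ (c N))|]. rewrite (norm_minus_sym (c N)).
    generalize (Hd N n Hn) (Hd N m Hm) (Hsmall N) (HN N (le_n N)). lra. }
  exists l. intros k. destruct (proj1 (filterlim_seq_normP c l) Hl (r k / 3)) as [N HN];
    [generalize (Hpos k); lra|].
  set (j := Nat.max k N). eapply Rle_trans; [apply (norm_minus_triangle _ (c j))|].
  rewrite (norm_minus_sym l). generalize (HN j (Nat.le_max_r _ _)) (Hd k j (Nat.le_max_l _ _)). lra.
Qed.

End UniformBoundedness.

Theorem uniform_boundedness {X : NormedModule R_AbsRing} (A : nat -> X -> X) :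
  seq_complete X -> (forall n, bounded_linear (A n)) ->
  (forall x, exists B, forall n, norm (A n x) <= B) ->
  exists C, forall n x, norm (A n x) <= C * norm x.
Proof.
  intros HX HA Hpt. apply NNPP. intros Hunb.
  destruct (choice (fun (crm : X * posreal * R) (p : X * posreal) =>
      let '(c, r, m) := crm in
      snd p <= r / 4 /\ norm (minus (fst p) c) <= r / 2 /\
      forall z, norm (minus z (fst p)) <= snd p -> exists n, m < norm (A n z)))
    as [F HF].
  { intros [[c r] m]. exact (unbounded_family_step A HA Hunb c r m). }
  (* Nested balls B(c k, r k): every point of B(c (k+1), r (k+1)) has an orbit value above k. *)
  pose (sq := fix sq (k : nat) : X * posreal :=
    match k with O => (zero, mkposreal 1 Rlt_0_1) | S k' => F (fst (sq k'), snd (sq k'),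
      INR k') end).
  set (c := fun k => fst (sq k)). set (r := fun k => pos (snd (sq k))).
  assert (Hst : forall k, r (S k) <= r k / 4 /\ norm (minus (c (S k)) (c k)) <= r k / 2 /\
     forall z, norm (minus z (c (S k))) <= r (S k) -> exists n, INR k < norm (A n z)).
  { intros k. exact (HF (fst (sq k), snd (sq k), INR k)). }
  destruct (nested_balls_limit HX c r) as [l Hl].
  { intros k. apply cond_pos. }
  { intros k. destruct (Hst k) as [H1 [H2 _]]. split; assumption. }
  destruct (Hpt l) as [B HB]. destruct (INR_unbounded B) as [k Hk].
  destruct (Hst k) as [_ [_ H3]]. destruct (H3 l (Hl (S k))) as [n Hn]. generalize (HB n). lra.
Qed.

Section C0Group.
Context {X : NormedModule R_AbsRing} (T : R -> X -> X) (HT : C0_group T).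

Lemma C0_bounded_linear t : bounded_linear (T t).
Proof. apply HT. Qed.

Lemma C0_zero x : T 0 x = x.
Proof. apply HT. Qed.

Lemma C0_add s t x : T (s + t) x = T s (T t x).
Proof. apply HT. Qed.

Lemma C0_inv t x : T t (T (- t) x) = x.
Proof. rewrite <- C0_add, Rplus_opp_r. apply C0_zero. Qed.

Lemma C0_minus t x y : T t (minus x y) = minus (T t x) (T t y).
Proof. apply bounded_linear_minus, C0_bounded_linear. Qed.

Lemma C0_strong_continuous x a : continuous (fun t => T t x) a.
Proof.
  apply (continuous_ext (fun t => T a (T (t - a) x))).
  { intros t. rewrite <- C0_add. f_equal. ring. }
  apply continuous_comp; [|apply bounded_linear_continuous, C0_bounded_linear].
  apply (continuous_comp (fun t => t - a) (fun u => T u x)).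
  - apply continuous_R_lipschitz. intros y z. right. f_equal. ring.
  - unfold continuous. rewrite Rminus_diag, C0_zero. apply HT.
Qed.

Lemma C0_iter u k x : T (INR k * u) x = Nat.iter k (T u) x.
Proof.
  induction k; [rewrite Rmult_0_l; apply C0_zero|].
  rewrite Nat.iter_succ, <- IHk, <- C0_add, S_INR. f_equal. ring.
Qed.

Hypothesis HX : seq_complete X.

(* By uniform boundedness: otherwise some [T t_n], [|t_n| <= 1/(n+1)], has norm above [n+1],
   although [T t_n x -> x] for every [x]. *)
Lemma C0_bound_near0 : exists eta M, 0 < eta /\
  forall t, Rabs t <= eta -> forall x, norm (T t x) <= M * norm x.
Proof.
  apply NNPP. intros Hno.
  assert (Hbad : forall n : nat, exists t, Rabs t <= 1 / (INR n + 1) /\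
                 exists x, (INR n + 1) * norm x < norm (T t x)).
  { intros n. apply NNPP. intros Hn. apply Hno.
    exists (1 / (INR n + 1)), (INR n + 1).
    split; [generalize (pos_INR n); intros; apply Rdiv_lt_0_compat; lra|].
    intros t Ht x. apply Rnot_lt_le. intros Hlt. apply Hn. exists t. split; eauto. }
  destruct (choice _ Hbad) as [tn Htn].
  destruct (uniform_boundedness (fun n => T (tn n)) HX) as [C HC].
  { intros n. apply C0_bounded_linear. }
  { intros x. destruct (proj1 (continuous_normP _ _) (C0_strong_continuous x 0) 1 Rlt_0_1)
    as [d [Hd Hd']].
    destruct (inv_succ_lt d Hd) as [N HN].
    apply (seq_bounded_of_eventually _ (S N) (norm x + 1)). intros n HnN.
    assert (Habs : Rabs (tn n - 0) < d).
    { rewrite Rminus_0_r. eapply Rle_lt_trans; [apply Htn|]. eapply Rle_lt_trans; [|apply HN].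
      unfold Rdiv. rewrite !Rmult_1_l. apply Rinv_le_contravar; [generalize (pos_INR N); lra|].
      apply Rplus_le_compat_r, le_INR. lia. }
    specialize (Hd' _ Habs). rewrite C0_zero in Hd'.
    generalize (norm_minus_ge (T (tn n) x) x). lra. }
  destruct (INR_unbounded C) as [n Hn]. destruct (Htn n) as [_ [x Hx]].
  generalize (HC n x) (norm_ge_0 x). intros H1 H2.
  assert (C * norm x <= INR n * norm x) by (apply Rmult_le_compat_r; lra). nra.
Qed.

Lemma C0_local_bound H : exists C, 1 <= C /\
  forall t, Rabs t <= H -> forall x, norm (T t x) <= C * norm x.
Proof.
  destruct C0_bound_near0 as [eta [M [Heta HM]]].
  set (M' := Rmax M 1). assert (HM1 : 1 <= M') by apply Rmax_r.
  assert (HM' : forall t, Rabs t <= eta -> forall x, norm (T t x) <= M' * norm x).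
  { intros t Ht x. eapply Rle_trans; [apply HM; auto|].
    apply Rmult_le_compat_r; [apply norm_ge_0 | apply Rmax_l]. }
  destruct (INR_unbounded (H / eta)) as [N HN].
  exists (M' ^ S N). split; [apply pow_R1_Rle; lra|].
  intros t Ht x. set (u := t / INR (S N)).
  assert (HSN : 0 < INR (S N)) by (apply lt_0_INR; lia).
  assert (Hu : Rabs u <= eta).
  { unfold u, Rdiv. rewrite Rabs_mult, Rabs_inv, (Rabs_pos_eq (INR (S N))) by lra.
    apply Rmult_le_reg_r with (INR (S N)); [lra|]. rewrite Rmult_assoc, Rinv_l, Rmult_1_r by lra.
    assert (H <= eta * INR N).
    { replace H with (eta * (H / eta)) by (field; lra). apply Rmult_le_compat_l; lra. }
    rewrite S_INR. lra. }
  replace t with (INR (S N) * u) by (unfold u; field; lra).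
  rewrite C0_iter. generalize (S N). intros k. induction k; simpl; [lra|].
  eapply Rle_trans; [apply HM', Hu|]. rewrite Rmult_assoc. apply Rmult_le_compat_l; lra.
Qed.

Lemma C0_joint_continuous (phi : R -> R) (g : R -> X) r0 :
  continuous phi r0 -> continuous g r0 -> continuous (fun r => T (phi r) (g r)) r0.
Proof.
  intros Hp Hg. apply continuous_normP. intros eps He.
  destruct (C0_local_bound (Rabs (phi r0) + 1)) as [C [HC HCb]].
  destruct (proj1 (continuous_normP _ _) (C0_strong_continuous (g r0) (phi r0)) (eps / 2))
    as [d1 [Hd1 H1]]; [lra|].
  destruct (proj1 (continuous_normP (V := R_NormedModule) _ _) Hp (Rmin d1 1)) as [d2 [Hd2 H2]];
    [apply Rmin_pos; lra|].
  destruct (proj1 (continuous_normP _ _) Hg (eps / (2 * C))) as [d3 [Hd3 H3]];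
    [apply Rdiv_lt_0_compat; lra|].
  exists (Rmin d2 d3). split; [apply Rmin_pos; auto|]. intros y Hy.
  assert (Hy2 : Rabs (phi y - phi r0) < Rmin d1 1)
    by (apply H2; eapply Rlt_le_trans; [exact Hy | apply Rmin_l]).
  assert (Hy3 : norm (minus (g y) (g r0)) < eps / (2 * C))
    by (apply H3; eapply Rlt_le_trans; [exact Hy | apply Rmin_r]).
  eapply Rle_lt_trans; [apply (norm_minus_triangle _ (T (phi y) (g r0)))|].
  rewrite <- C0_minus.
  assert (Hb : norm (T (phi y) (minus (g y) (g r0))) <= C * norm (minus (g y) (g r0))).
  { apply HCb. generalize (Rmin_r d1 1) (Rabs_triang_inv (phi y) (phi r0)). lra. }
  assert (C * norm (minus (g y) (g r0)) <= eps / 2).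
  { apply Rle_trans with (C * (eps / (2 * C))); [apply Rmult_le_compat_l; lra|].
    right. field. lra. }
  generalize (H1 (phi y) (Rlt_le_trans _ _ _ Hy2 (Rmin_l _ _))). lra.
Qed.

End C0Group.

Section Integral.
Context {X : NormedModule R_AbsRing}.

Lemma is_RInt_uniq (g : R -> X) a b I1 I2 : is_RInt g a b I1 -> is_RInt g a b I2 -> I1 = I2.
Proof.
  intros H1 H2. apply (filterlim_locally_unique (F := Riemann_fine a b) _ _ _ H1 H2).
Qed.

(* [RInt] needs a [CompleteNormedModule]; over a [NormedModule] an integral is picked by choice. *)
Definition integral (g : R -> X) (a b : R) : X :=
  epsilon (inhabits zero) (fun I => is_RInt g a b I).

Lemma integral_correct g a b : ex_RInt g a b -> is_RInt g a b (integral g a b).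
Proof. apply (epsilon_spec (inhabits zero) (fun I => is_RInt g a b I)). Qed.

Lemma integral_continuous (HI : continuous_integrable X) (h : R -> X) a :
  (forall z, continuous h z) -> forall s, continuous (fun s => integral h a s) s.
Proof.
  intros Hh s. apply (continuous_RInt_1 h a s). apply filter_forall. intros z.
  apply integral_correct, HI, Hh.
Qed.

Lemma is_RInt_left_closure (HI : continuous_integrable X) (G h W : R -> X) c b : c < b ->
  (forall z, continuous h z) -> (forall r, c <= r < b -> G r = h r) -> continuous W b ->
  (forall y, c <= y < b -> is_RInt G c y (minus (W y) (W c))) ->
  is_RInt G c b (minus (W b) (W c)).
Proof.
  intros Hcb Hh HGh HW Hint.
  assert (HPsi : forall z, is_RInt h c z (integral h c z))
    by (intros z; apply integral_correct, HI, Hh).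
  replace (minus (W b) (W c)) with (integral h c b).
  - eapply is_RInt_ext; [|apply HPsi]. intros r Hr.
    rewrite Rmin_left, Rmax_right in Hr by lra. symmetry. apply HGh. lra.
  - symmetry.
    apply (continuous_left_eq (fun y => minus (W y) (W c)) (fun z => integral h c z) b c Hcb).
    + intros y Hy. apply (is_RInt_uniq h c y); [|apply HPsi].
      eapply is_RInt_ext; [|exact (Hint y Hy)]. intros r Hr. apply HGh.
      destruct (Req_dec c y) as [->|Hne].
      * rewrite Rmin_left, Rmax_left in Hr by lra. lra.
      * rewrite Rmin_left, Rmax_right in Hr by lra. lra.
    + apply continuous_minus; [exact HW | apply continuous_const].
    + apply (integral_continuous HI), Hh.
Qed.

End Integral.

Section Pullback.
Context {X : NormedModule R_AbsRing} (T : R -> X -> X) (HT : C0_group T).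

Lemma is_RInt_mild_of_pullback (g : R -> X) a t J :
  is_RInt (fun r => T (- r) (g r)) a t J ->
  is_RInt (fun r => T (t - a - r) (g (a + r))) 0 (t - a) (T t J).
Proof.
  intros H. apply (is_RInt_bounded_linear (T t)) in H; [|apply C0_bounded_linear, HT].
  assert (H2 := is_RInt_comp_lin (fun r => T t (T (- r) (g r))) 1 a 0 (t - a) (T t J)).
  replace (1 * 0 + a) with a in H2 by ring. replace (1 * (t - a) + a) with t in H2 by ring.
  eapply is_RInt_ext; [|exact (H2 H)]. intros x _. simpl.
  rewrite (@scal_one _ (NormedModule.ModuleSpace R_AbsRing X)), <- (C0_add T HT).
  replace (1 * x + a) with (a + x) by ring. f_equal. ring.
Qed.

Lemma is_RInt_pullback_of_mild (g : R -> X) a t I :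
  is_RInt (fun r => T (t - a - r) (g (a + r))) 0 (t - a) I ->
  is_RInt (fun r => T (- r) (g r)) a t (T (- t) I).
Proof.
  intros H. apply (is_RInt_bounded_linear (T (- t))) in H; [|apply C0_bounded_linear, HT].
  assert (H2 := is_RInt_comp_lin (fun r => T (- t) (T (t - a - r) (g (a + r))))
                  1 (- a) a t (T (- t) I)).
  replace (1 * a + - a) with 0 in H2 by ring. replace (1 * t + - a) with (t - a) in H2 by ring.
  eapply is_RInt_ext; [|exact (H2 H)]. intros x _. simpl.
  rewrite (@scal_one _ (NormedModule.ModuleSpace R_AbsRing X)), <- (C0_add T HT).
  replace (a + (1 * x + - a)) with x by ring. f_equal. ring.
Qed.

Lemma pullback_mild a t (xa I : X) :
  T (- t) (plus (T (t - a) xa) I) = plus (T (- a) xa) (T (- t) I).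
Proof.
  rewrite (proj1 (C0_bounded_linear T HT (- t))), <- (C0_add T HT). do 2 f_equal. ring.
Qed.

End Pullback.

Section Picard.
Context {X : NormedModule R_AbsRing} (T : R -> X -> X) (HT : C0_group T)
  (HX : seq_complete X) (HI : continuous_integrable X) (HU : RInt_unif_closed X)
  (F : X -> X) (L : R) (HL : 0 < L)
  (HF : forall u v, norm (minus (F u) (F v)) <= L * norm (minus u v)) (HF0 : F zero = zero)
  (a b : R) (c : X) (Hab : a < b).

(* Time is clamped to [a, b] so that the iterates live in a space of functions on all of R. *)
Definition picard_field (r : R) (w : X) : X := T (- clamp a b r) (F (T (clamp a b r) w)).

Fixpoint picard_iter (n : nat) : R -> X :=
  match n with
  | O => fun _ => c
  | S n' => fun t => plus c (integral (fun r => picard_field r (picard_iter n' r)) a (clamp a b t))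
  end.

Lemma clamp_abs_bound r :
  Rabs (clamp a b r) <= Rabs a + Rabs b /\ Rabs (- clamp a b r) <= Rabs a + Rabs b.
Proof.
  rewrite Rabs_Ropp. destruct (clamp_range a b r) as [H1 H2]; [lra|].
  split; unfold Rabs; repeat destruct Rcase_abs; lra.
Qed.

Lemma picard_field_continuous (g : R -> X) :
  (forall z, continuous g z) -> forall z, continuous (fun r => picard_field r (g r)) z.
Proof.
  intros Hg z. unfold picard_field.
  assert (Hcl : forall z, continuous (clamp a b) z) by apply continuous_R_lipschitz,
      clamp_lipschitz.
  apply (C0_joint_continuous T HT HX (fun r => - clamp a b r)).
  - apply (continuous_opp (V := R_NormedModule)), Hcl.
  - apply (continuous_comp _ F); [|apply (continuous_lipschitz F L HF)].
    apply (C0_joint_continuous T HT HX); [apply Hcl | apply Hg].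
Qed.

Section Iterates.
Context (C : R) (HC1 : 1 <= C)
  (HCb : forall t, Rabs t <= Rabs a + Rabs b -> forall x, norm (T t x) <= C * norm x).

Let kap := C * L * C.
Let E := exp (2 * kap * (b - a)).
Let B := norm c * E.

Lemma picard_rate_pos : 0 < kap.
Proof. unfold kap. apply Rmult_lt_0_compat; [apply Rmult_lt_0_compat|]; lra. Qed.

Lemma picard_field_lipschitz r w w' :
  norm (minus (picard_field r w) (picard_field r w')) <= kap * norm (minus w w').
Proof.
  destruct (clamp_abs_bound r) as [H1 H2]. unfold picard_field, kap.
  rewrite <- (C0_minus T HT). eapply Rle_trans; [apply HCb, H2|].
  rewrite !Rmult_assoc. apply Rmult_le_compat_l; [lra|].
  eapply Rle_trans; [apply HF|]. apply Rmult_le_compat_l; [lra|].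
  rewrite <- (C0_minus T HT). apply HCb, H1.
Qed.

Lemma picard_field_bound r w : norm (picard_field r w) <= kap * norm w.
Proof.
  assert (H0 : picard_field r zero = zero).
  { unfold picard_field. rewrite (bounded_linear_zero _ (C0_bounded_linear T HT _)), HF0.
    apply (bounded_linear_zero _ (C0_bounded_linear T HT _)). }
  apply (norm_lipschitz_zero (picard_field r)); [apply picard_field_lipschitz | exact H0].
Qed.

Lemma picard_iter_continuous n z : continuous (picard_iter n) z.
Proof.
  revert z. induction n; intros z; [apply continuous_const|].
  apply (continuous_plus (fun _ => c)); [apply continuous_const|].
  apply (continuous_comp (clamp a b)); [apply continuous_R_lipschitz, clamp_lipschitz|].
  apply (integral_continuous HI). apply picard_field_continuous, IHn.
Qed.

Lemma picard_iter_integral n s :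
  is_RInt (fun r => picard_field r (picard_iter n r)) a s
    (integral (fun r => picard_field r (picard_iter n r)) a s).
Proof. apply integral_correct, HI, picard_field_continuous, picard_iter_continuous. Qed.

Lemma picard_iter_step n t :
  norm (minus (picard_iter (S n) t) (picard_iter n t))
    <= norm c * (1/2) ^ n * exp (2 * kap * (clamp a b t - a)).
Proof.
  assert (Hk := picard_rate_pos).
  revert t. induction n; intros t; destruct (clamp_range a b t) as [Ht1 Ht2]; try lra.
  - simpl picard_iter at 1. change (picard_iter 0 t) with c. rewrite minus_plus_l.
    eapply Rle_trans.
    { apply (norm_RInt_le_const (fun r => picard_field r (picard_iter 0 r)) a (clamp a b t) _
               (kap * norm c)); [lra| |apply picard_iter_integral].
      intros x _. apply picard_field_bound. }
    simpl. rewrite Rmult_1_r. generalize (norm_ge_0 c). intros Hc.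
    assert (0 <= kap * (clamp a b t - a)) by (apply Rmult_le_pos; lra).
    apply Rle_trans with (norm c * (1 + 2 * kap * (clamp a b t - a))); [nra|].
    apply Rmult_le_compat_l, exp_ineq1_le. exact Hc.
  - simpl picard_iter at 1 2. rewrite minus_plus_cancel_l.
    eapply Rle_trans.
    { apply (norm_RInt_le (fun r => minus (picard_field r (picard_iter (S n) r))
                                           (picard_field r (picard_iter n r)))
        (fun r => kap * (norm c * (1/2) ^ n) * exp (2 * kap * (r - a))) a (clamp a b t));
        [lra| |apply is_RInt_minus; apply picard_iter_integral|apply is_RInt_exp_affine; lra].
      intros x Hx. eapply Rle_trans; [apply picard_field_lipschitz|].
      rewrite Rmult_assoc. apply Rmult_le_compat_l; [lra|].
      eapply Rle_trans; [apply IHn|]. rewrite clamp_id by lra. lra. }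
    generalize (norm_ge_0 c) (pow_le (1/2) n) (exp_pos (2 * kap * (clamp a b t - a))). intros H1 H2 H3.
    replace (kap * (norm c * (1/2) ^ n) / (2 * kap)) with (norm c * (1/2) ^ n / 2) by (field; lra).
    simpl. nra.
Qed.

Lemma picard_iter_cauchy n d t :
  norm (minus (picard_iter (n + d) t) (picard_iter n t)) <= 2 * B * (1/2) ^ n.
Proof.
  assert (HE : forall t, exp (2 * kap * (clamp a b t - a)) <= E).
  { intros s. apply exp_le_compat. generalize picard_rate_pos (clamp_range a b s). nra. }
  assert (Hd : norm (minus (picard_iter (n + d) t) (picard_iter n t))
                <= 2 * B * ((1/2) ^ n - (1/2) ^ (n + d))).
  { induction d.
    - rewrite Nat.add_0_r, norm_minus_diag. lra.
    - replace (n + S d)%nat with (S (n + d)) by lia.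
      eapply Rle_trans; [apply (norm_minus_triangle _ (picard_iter (n + d) t))|].
      assert (Hs : norm (minus (picard_iter (S (n + d)) t) (picard_iter (n + d) t))
                   <= B * (1/2) ^ (n + d)).
      { eapply Rle_trans; [apply picard_iter_step|]. unfold B.
        replace (norm c * E * (1/2) ^ (n + d)) with (norm c * (1/2) ^ (n + d) * E) by ring.
        apply Rmult_le_compat_l, HE. apply Rmult_le_pos; [apply norm_ge_0 | apply pow_le; lra]. }
      rewrite <- tech_pow_Rmult. lra. }
  assert (0 <= B) by (apply Rmult_le_pos; [apply norm_ge_0 | apply Rlt_le, exp_pos]).
  generalize (pow_le (1/2) (n + d) ltac:(lra)). nra.
Qed.

Lemma picard_iter_limit : exists W : R -> X,
  forall n t, norm (minus (picard_iter n t) (W t)) <= 2 * B * (1/2) ^ n.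
Proof.
  assert (HB : 0 <= 2 * B)
    by (apply Rmult_le_pos; [lra | apply Rmult_le_pos; [apply norm_ge_0 | apply Rlt_le, exp_pos]]).
  assert (Hcauchy : forall n m t, (n <= m)%nat ->
            norm (minus (picard_iter m t) (picard_iter n t)) <= 2 * B * (1/2) ^ n).
  { intros n m t Hnm. replace m with (n + (m - n))%nat by lia. apply picard_iter_cauchy. }
  destruct (choice (fun t l => filterlim (fun n => picard_iter n t) eventually (locally l)))
    as [W HW].
  { intros t. apply HX. intros eps He.
    destruct (half_pow_scaled_lt (2 * B) (eps / 2) HB) as [N HN]; [lra|].
    exists N. intros n m Hn Hm.
    eapply Rle_lt_trans; [apply (norm_minus_triangle _ (picard_iter N t))|].
    rewrite (norm_minus_sym (picard_iter N t)).
    generalize (Hcauchy N n t Hn) (Hcauchy N m t Hm) (HN N (le_n N)). lra. }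
  exists W. intros n t. apply Rle_plus_epsilon. intros eps He.
  destruct (proj1 (filterlim_seq_normP _ _) (HW t) eps He) as [N HN].
  set (m := Nat.max n N). eapply Rle_trans; [apply (norm_minus_triangle _ (picard_iter m t))|].
  rewrite (norm_minus_sym (picard_iter n t)).
  generalize (Hcauchy n m t (Nat.le_max_l _ _)) (HN m (Nat.le_max_r _ _)). lra.
Qed.

Lemma picard_fixed_point : exists W : R -> X, W a = c /\
  forall t, a <= t <= b -> is_RInt (fun r => T (- r) (F (T r (W r)))) a t (minus (W t) c).
Proof.
  destruct picard_iter_limit as [W HW].
  assert (HB : 0 <= 2 * B)
    by (apply Rmult_le_pos; [lra | apply Rmult_le_pos; [apply norm_ge_0 | apply Rlt_le, exp_pos]]).
  assert (Hk := picard_rate_pos).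
  assert (HWlim : forall t, filterlim (fun n => picard_iter (S n) t) eventually (locally (W t))).
  { intros t. apply filterlim_seq_normP. intros eps He.
    destruct (half_pow_scaled_lt (2 * B) eps HB He) as [N HN]. exists N. intros n Hn.
    eapply Rle_lt_trans; [apply HW|]. apply HN. lia. }
  exists W. split.
  - apply (seq_lim_unique (fun n => picard_iter (S n) a)); [apply HWlim|].
    apply (filterlim_ext (fun _ => c)); [|apply filterlim_const].
    intros n. simpl. rewrite clamp_id by lra.
    rewrite (is_RInt_uniq _ a a _ zero (picard_iter_integral n a) (is_RInt_point _ a)).
    symmetry. apply plus_zero_r.
  - intros t Ht.
    destruct (HU (fun n r => picard_field r (picard_iter n r)) (fun r => picard_field r (W r)) a t
                (fun n => integral (fun r => picard_field r (picard_iter n r)) a t))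
                  as [I [HI1 HI2]].
    { intros n. apply picard_iter_integral. }
    { intros eps He. destruct (half_pow_scaled_lt (kap * (2 * B)) eps)
      as [N HN]; [nra | exact He |].
      exists N. intros n r Hn. eapply Rle_lt_trans; [apply picard_field_lipschitz|].
      eapply Rle_lt_trans; [|apply (HN n Hn)]. rewrite Rmult_assoc.
        apply Rmult_le_compat_l; [lra | apply HW]. }
    assert (HWt : W t = plus c I).
    { apply (seq_lim_unique (fun n => picard_iter (S n) t)); [apply HWlim|].
      apply filterlim_seq_normP. intros eps He.
      destruct (proj1 (filterlim_seq_normP _ _) HI2 eps He) as [N HN]. exists N. intros n Hn.
      simpl. rewrite clamp_id, minus_plus_cancel_l by lra. apply HN, Hn. }
    rewrite HWt, minus_plus_l. apply (is_RInt_ext (fun r => picard_field r (W r))); [|exact HI1].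
    intros x Hx. rewrite Rmin_left, Rmax_right in Hx by lra.
    unfold picard_field. rewrite clamp_id by lra. reflexivity.
Qed.

End Iterates.

Lemma picard_existence : exists W : R -> X, W a = c /\
  forall t, a <= t <= b -> is_RInt (fun r => T (- r) (F (T r (W r)))) a t (minus (W t) c).
Proof.
  destruct (C0_local_bound T HT HX (Rabs a + Rabs b)) as [C [HC1 HCb]].
  exact (picard_fixed_point C HC1 HCb).
Qed.

End Picard.

Section Partition.
Context (ts : nat -> R) (Hts : increasing_unbounded_from0 ts).

Lemma partition_lt i j : (i < j)%nat -> ts i < ts j.
Proof.
  destruct Hts as [_ [Hinc _]]. intros Hij. induction Hij; [apply Hinc|].
  eapply Rlt_trans; [apply IHHij | apply Hinc].
Qed.

Lemma partition_le i j : (i <= j)%nat -> ts i <= ts j.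
Proof.
  intros Hij. destruct (Nat.eq_dec i j) as [->|Hne]; [lra|]. left. apply partition_lt. lia.
Qed.

Lemma partition_nonneg k : 0 <= ts k.
Proof. rewrite <- (proj1 Hts). apply partition_le. lia. Qed.

Lemma partition_index_exists t : 0 <= t -> exists k, ts k <= t < ts (S k).
Proof.
  destruct Hts as [H0 [_ Hunb]]. intros Ht. destruct (Hunb t) as [n Hn]. induction n; [lra|].
  destruct (Rlt_or_le t (ts n)) as [H|H]; [auto | exists n; split; auto].
Qed.

Lemma partition_index_unique k j t : ts k <= t < ts (S k) -> ts j <= t < ts (S j) -> k = j.
Proof.
  intros Hk Hj. destruct (Nat.lt_total k j) as [H|[H|H]]; auto.
  - assert (ts (S k) <= ts j) by (apply partition_le; lia). lra.
  - assert (ts (S j) <= ts k) by (apply partition_le; lia). lra.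
Qed.

Lemma partition_index_left b : 0 < b -> exists m, ts m < b <= ts (S m).
Proof.
  destruct Hts as [H0 [Hinc Hunb]]. intros Hb. destruct (Hunb b) as [n Hn]. induction n; [lra|].
  destruct (Rlt_or_le b (ts n)) as [H|[H|H]]; [auto | exists n; split; lra|].
  destruct n; [lra|]. exists n. split; [rewrite <- H; apply Hinc | lra].
Qed.

End Partition.

(* The [k] with [ts k <= t < ts (k+1)]; junk value [0] when [t] is not covered. *)
Definition partition_index (ts : nat -> R) (t : R) : nat :=
  epsilon (inhabits 0%nat) (fun k => ts k <= t < ts (S k)).

Lemma partition_index_eq ts t k : increasing_unbounded_from0 ts ->
  ts k <= t < ts (S k) -> partition_index ts t = k.
Proof.
  intros Hts Hk. apply (partition_index_unique ts Hts _ _ t); [|exact Hk].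
  apply (epsilon_spec (inhabits 0%nat) (fun k => ts k <= t < ts (S k))). exists k. exact Hk.
Qed.

Lemma partition_index_spec ts t : increasing_unbounded_from0 ts -> 0 <= t ->
  ts (partition_index ts t) <= t < ts (S (partition_index ts t)).
Proof.
  intros Hts Ht. apply (epsilon_spec (inhabits 0%nat) (fun k => ts k <= t < ts (S k))).
  apply partition_index_exists; auto.
Qed.

Section ClosedLoop.
Context {X U : NormedModule R_AbsRing} (T : R -> X -> X) (HT : C0_group T)
  {Q : Type} (f : Q -> X -> U -> X) (K : X -> U) (Lf LK : R) (HLf : 0 < Lf) (HLK : 0 <= LK)
  (Hf : forall q x u x' u',
    norm (minus (f q x u) (f q x' u')) <= Lf * (norm (minus x x') + norm (minus u u')))
  (Hf0 : forall q, f q zero zero = zero)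
  (HK : forall x y, norm (minus (K x) (K y)) <= LK * norm (minus x y)) (HK0 : K zero = zero).

Lemma closed_loop_lipschitz q u v :
  norm (minus (f q u (K u)) (f q v (K v))) <= Lf * (1 + LK) * norm (minus u v).
Proof.
  eapply Rle_trans; [apply Hf|]. rewrite Rmult_assoc. apply Rmult_le_compat_l; [lra|].
  generalize (HK u v). lra.
Qed.

Lemma closed_loop_zero q : f q zero (K zero) = zero.
Proof. rewrite HK0. apply Hf0. Qed.

Hypotheses (HX : seq_complete X) (HI : continuous_integrable X) (HU : RInt_unif_closed X).

(* Solve mode by mode with Picard iteration, in the pulled-back variable [T (-t) (z t)]. *)
Lemma Sigma0_traj_exists sigma x0 : PC sigma -> exists z, Sigma0_traj T f K sigma x0 z.
Proof.
  intros [ts [Hts Hconst]].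
  set (P := fun (q : Q) (a b : R) (c : X) (W : R -> X) => W a = c /\
    forall t, a <= t <= b ->
      is_RInt (fun r => T (- r) (f q (T r (W r)) (K (T r (W r))))) a t (minus (W t) c)).
  destruct (choice (fun (p : Q * R * R * X) W => let '(q, a, b, c) := p in a < b -> P q a b c W))
    as [Sol HSol].
  { intros [[[q a] b] c]. destruct (Rlt_or_le a b) as [Hab|Hab]; [|exists (fun _ => c); lra].
    assert (HL : 0 < Lf * (1 + LK)) by nra.
    destruct (picard_existence T HT HX HI HU (fun x => f q x (K x)) (Lf * (1 + LK)) HL
                (closed_loop_lipschitz q) (closed_loop_zero q) a b c Hab) as [W HW].
    exists W. intros _. exact HW. }
  pose (cs := fix cs (k : nat) : X :=
    match k with O => x0 | S k' => Sol (sigma (ts k'), ts k', ts (S k'), cs k') (ts (S k')) end).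
  set (W := fun k => Sol (sigma (ts k), ts k, ts (S k), cs k)).
  assert (Hinc : forall k, ts k < ts (S k)) by apply Hts.
  assert (HW : forall k, P (sigma (ts k)) (ts k) (ts (S k)) (cs k) (W k))
    by (intros k; exact (HSol (sigma (ts k), ts k, ts (S k), cs k) (Hinc k))).
  set (z := fun t => T t (W (partition_index ts t) t)).
  assert (Hz : forall k r, ts k <= r <= ts (S k) -> z r = T r (W k r)).
  { intros k r Hr. unfold z. destruct (Rlt_or_le r (ts (S k))) as [Hlt|Hge].
    - rewrite (partition_index_eq ts r k Hts) by lra. reflexivity.
    - assert (r = ts (S k)) as -> by lra.
      rewrite (partition_index_eq ts (ts (S k)) (S k) Hts) by (split; [lra | apply Hinc]).
      f_equal. exact (proj1 (HW (S k))). }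
  exists z, ts. split; [split; auto|split].
  - rewrite (Hz 0%nat 0)
    by (rewrite (proj1 Hts); split; [lra | left; rewrite <- (proj1 Hts); apply Hinc]).
    rewrite (C0_zero T HT), <- (proj1 Hts). exact (proj1 (HW 0%nat)).
  - intros k t Ht. exists (T t (minus (W k t) (cs k))). split.
    + eapply is_RInt_ext;
        [|exact (is_RInt_mild_of_pullback T HT
                   (fun r => f (sigma (ts k)) (T r (W k r)) (K (T r (W k r))))
                   _ _ _ (proj2 (HW k) t Ht))].
      intros r Hr. rewrite Rmin_left, Rmax_right in Hr by lra.
      rewrite (Hz k (ts k + r)) by lra. reflexivity.
    + rewrite (Hz k t Ht), (Hz k (ts k)) by (split; [lra | left; apply Hinc]).
      rewrite (proj1 (HW k)), <- (C0_add T HT). replace (t - ts k + ts k) with t by ring.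
      rewrite <- (proj1 (C0_bounded_linear T HT t)), plus_minus_r. reflexivity.
Qed.

End ClosedLoop.

Section PullbackIntegrals.
Context {X U : NormedModule R_AbsRing} (T : R -> X -> X) (HT : C0_group T)
  {Q : Type} (f : Q -> X -> U -> X) (K : X -> U).

Lemma Sigma0_pullback_integral sigma x0 z : Sigma0_traj T f K sigma x0 z -> forall t, 0 <= t ->
  is_RInt (fun r => T (- r) (f (sigma r) (z r) (K (z r)))) 0 t (minus (T (- t) (z t)) x0).
Proof.
  intros [ts [[Hts Hconst] [Hz0 Hcl]]].
  assert (Hk : forall k t, 0 <= t <= ts k ->
    is_RInt (fun r => T (- r) (f (sigma r) (z r) (K (z r)))) 0 t (minus (T (- t) (z t)) x0)).
  { induction k; intros t Ht.
    - rewrite (proj1 Hts) in Ht. replace t with 0 by lra.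
      rewrite Ropp_0, (C0_zero T HT), Hz0, minus_eq_zero. apply is_RInt_point.
    - destruct (Rle_or_lt t (ts k)) as [Hle|Hlt]; [apply IHk; lra|].
      destruct (Hcl k t) as [I [HI Hzt]]; [split; [lra | apply Ht]|].
      assert (H0k := partition_nonneg ts Hts k).
      replace (minus (T (- t) (z t)) x0)
        with (plus (minus (T (- ts k) (z (ts k))) x0) (T (- t) I))
        by (rewrite Hzt, (pullback_mild T HT); apply plus_minus_swap).
      apply is_RInt_Chasles with (ts k); [apply IHk; lra|].
      eapply is_RInt_ext;
        [|exact (is_RInt_pullback_of_mild T HT (fun r => f (sigma (ts k)) (z r) (K (z r)))
                   _ _ _ HI)].
      intros r Hr. rewrite Rmin_left, Rmax_right in Hr by lra.
      rewrite (Hconst k r) by lra. reflexivity. }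
  intros t Ht. destruct (proj2 (proj2 Hts) t) as [k Hkt]. apply (Hk k). lra.
Qed.

(* The input applied at time [r]: the prediction [T (r - s_k) x(s_k)] from the last sample. *)
Definition sampled_field (s : nat -> R) (sigma : R -> Q) (x : R -> X) (r : R) : X :=
  f (sigma r) (x r) (K (T (r - s (partition_index s r)) (x (s (partition_index s r))))).

End PullbackIntegrals.

Section SampledPullback.
Context {X U : NormedModule R_AbsRing} (T : R -> X -> X) (HT : C0_group T)
  (HX : seq_complete X) (HI : continuous_integrable X)
  {Q : Type} (f : Q -> X -> U -> X) (K : X -> U) (Lf LK : R)
  (Hf : forall q x u x' u',
    norm (minus (f q x u) (f q x' u')) <= Lf * (norm (minus x x') + norm (minus u u')))
  (HK : forall x y, norm (minus (K x) (K y)) <= LK * norm (minus x y))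
  (s : nat -> R) (sigma : R -> Q) (x0 : X) (x : R -> X)
  (Hs : sampling_seq s) (Htraj : sampled_traj T f K s sigma x0 x).

Let V (t : R) : X := T (- t) (x t).
Let G (r : R) : X := T (- r) (sampled_field T f K s sigma x r).

Lemma sampled_pullback_step k t : s k <= t < s (S k) -> is_RInt G (s k) t (minus (V t) (V (s k))).
Proof.
  intros Ht. destruct (proj2 (proj2 Htraj) k t Ht) as [I [HI' Hxt]].
  set (g := fun r => f (sigma r) (x r) (K (T (r - s k) (x (s k))))).
  assert (Hmild : is_RInt (fun r => T (t - s k - r) (g (s k + r))) 0 (t - s k) I).
  { eapply is_RInt_ext; [|exact HI']. intros r _. unfold g.
    rewrite (Rplus_comm r (s k)). replace (s k + r - s k) with r by ring. reflexivity. }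
  replace (minus (V t) (V (s k))) with (T (- t) I)
    by (unfold V; rewrite Hxt, (pullback_mild T HT); symmetry; apply minus_plus_l).
  eapply is_RInt_ext; [|exact (is_RInt_pullback_of_mild T HT g _ _ _ Hmild)].
  intros r Hr. destruct (Req_dec (s k) t) as [Heq|Hne].
  { rewrite Heq, Rmin_left, Rmax_left in Hr by lra. lra. }
  rewrite Rmin_left, Rmax_right in Hr by lra.
  unfold G, sampled_field, g. rewrite (partition_index_eq s r k Hs) by lra. reflexivity.
Qed.

(* At [s (k+1)] the sampled equation is not available; pass to the limit from the left, where
   the integrand is continuous once [sigma] has stopped switching. *)
Lemma sampled_pullback_sample (HPC : PC sigma) k :
  is_RInt G (s k) (s (S k)) (minus (V (s (S k))) (V (s k))).
Proof.
  destruct HPC as [ts [Hts Hconst]].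
  set (b := s (S k)). assert (Hb : b = s (S k)) by reflexivity.
  assert (Hinc : s k < b) by apply Hs.
  assert (Hsk := partition_nonneg s Hs k).
  destruct (partition_index_left ts Hts b) as [m [Hm1 Hm2]]; [lra|].
  set (c := Rmax (s k) (ts m)).
  assert (Hc1 : s k <= c) by apply Rmax_l.
  assert (Hc2 : c < b) by (apply Rmax_lub_lt; lra).
  assert (Hsig : forall r, c <= r < b -> sigma r = sigma (ts m)).
  { intros r Hr. apply Hconst. generalize (Rmax_r (s k) (ts m)). fold c. lra. }
  set (xc := fun r => x (Rmax 0 r)).
  assert (Hxc : forall z, continuous xc z) by apply continuous_on_Rplus_extend, Htraj.
  set (ht := fun r => T (- r) (f (sigma (ts m)) (xc r) (K (T (r - s k) (x (s k)))))).
  assert (Hht : forall z, continuous ht z).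
  { intros z. apply (C0_joint_continuous T HT HX (fun r => - r)).
    { apply continuous_R_lipschitz. intros y w. rewrite <- Rabs_Ropp. right. f_equal. ring. }
    apply (continuous_lipschitz2 (f (sigma (ts m))) Lf); [intros; apply Hf | apply Hxc|].
    apply (continuous_comp _ K); [|apply (continuous_lipschitz K LK HK)].
    apply (C0_joint_continuous T HT HX (fun r => r - s k)); [|apply continuous_const].
    apply continuous_R_lipschitz. intros y w. right. f_equal. ring. }
  assert (HGht : forall r, c <= r < b -> G r = ht r).
  { intros r Hr. unfold G, ht, sampled_field, xc.
    rewrite (partition_index_eq s r k Hs), (Hsig r), (Rmax_right 0 r) by lra. reflexivity. }
  set (W := fun y => T (- y) (xc y)).
  assert (HWV : forall y, 0 <= y -> W y = V y)
    by (intros y Hy; unfold W, V, xc; rewrite Rmax_right by lra; reflexivity).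
  replace (minus (V b) (V (s k))) with (plus (minus (V c) (V (s k))) (minus (V b) (V c)))
    by apply plus_minus_chain.
  apply (is_RInt_Chasles G (s k) c b); [apply sampled_pullback_step; lra|].
  rewrite <- !HWV by lra. apply (is_RInt_left_closure HI G ht W c b Hc2 Hht HGht).
  - apply (C0_joint_continuous T HT HX (fun r => - r)); [|apply Hxc].
    apply continuous_R_lipschitz. intros y w. rewrite <- Rabs_Ropp. right. f_equal. ring.
  - intros y Hy. rewrite !HWV by lra.
    replace (minus (V y) (V c)) with (plus (opp (minus (V c) (V (s k)))) (minus (V y) (V (s k))))
      by (rewrite opp_minus; apply plus_minus_chain).
    apply (is_RInt_Chasles G c (s k) y); [apply is_RInt_swap|]; apply sampled_pullback_step; lra.
Qed.

Lemma sampled_pullback_integral (HPC : PC sigma) t : 0 <= t ->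
  is_RInt (fun r => T (- r) (sampled_field T f K s sigma x r)) 0 t (minus (T (- t) (x t)) x0).
Proof.
  fold G. fold (V t).
  assert (Hk : forall k t, 0 <= t <= s k -> is_RInt G 0 t (minus (V t) x0)).
  { induction k; intros t' Ht'.
    - rewrite (proj1 Hs) in Ht'. replace t' with 0 by lra.
      unfold V. rewrite Ropp_0, (C0_zero T HT), (proj1 Htraj), minus_eq_zero. apply is_RInt_point.
    - destruct (Rle_or_lt t' (s k)) as [Hle|Hlt]; [apply IHk; lra|].
      assert (Hsk := partition_nonneg s Hs k).
      replace (minus (V t') x0) with (plus (minus (V (s k)) x0) (minus (V t') (V (s k))))
        by apply plus_minus_chain.
      apply (is_RInt_Chasles G 0 (s k) t'); [apply IHk; lra|].
      destruct (Rlt_or_le t' (s (S k))) as [Hlt'|Hge].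
      + apply sampled_pullback_step. lra.
      + replace t' with (s (S k)) by lra. apply sampled_pullback_sample, HPC. }
  intros Ht. destruct (proj2 (proj2 Hs) t) as [k Hkt]. apply (Hk k). lra.
Qed.

End SampledPullback.

Section OnePeriod.
Context {X U : NormedModule R_AbsRing} (T : R -> X -> X) (HT : C0_group T)
  (HX : seq_complete X) (HI : continuous_integrable X) (HU : RInt_unif_closed X)
  {Q : Type} (f : Q -> X -> U -> X) (K : X -> U) (Lf LK : R) (HLf : 0 < Lf) (HLK : 0 <= LK)
  (Hf : forall q x u x' u',
    norm (minus (f q x u) (f q x' u')) <= Lf * (norm (minus x x') + norm (minus u u')))
  (Hf0 : forall q, f q zero zero = zero)
  (HK : forall x y, norm (minus (K x) (K y)) <= LK * norm (minus x y)) (HK0 : K zero = zero)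
  (M lam : R) (HM : 0 < M) (Hlam : 0 < lam)
  (HUGES : forall sigma x0 z, PC sigma -> Sigma0_traj T f K sigma x0 z ->
     forall t, 0 <= t -> norm (z t) <= M * exp (- lam * t) * norm x0).

Lemma f_linear_growth q u v : norm (f q u v) <= Lf * (norm u + norm v).
Proof. generalize (Hf q u v zero zero). rewrite Hf0, !nm_minus_zero_r. auto. Qed.

Lemma K_linear_growth u : norm (K u) <= LK * norm u.
Proof. exact (norm_lipschitz_zero K LK u HK HK0). Qed.

(* [tau] is chosen so that the bound of [Sigma0] has dropped to [1/4] at time [tau]. *)
Let tau := ln (4 * M + 1) / lam.
Let H := tau + 1.

Lemma tau_pos : 0 < tau.
Proof. apply Rdiv_lt_0_compat; [rewrite <- ln_1; apply ln_increasing|]; lra. Qed.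

Lemma Sigma0_decay_tau : M * exp (- lam * tau) <= / 4.
Proof.
  replace (- lam * tau) with (- ln (4 * M + 1)) by (unfold tau; field; lra).
  rewrite exp_Ropp, exp_ln by lra.
  apply Rmult_le_reg_r with (4 * M + 1); [lra|]. rewrite Rmult_assoc, Rinv_l, Rmult_1_r by lra. lra.
Qed.

Section Constants.
Context (C : R) (HC1 : 1 <= C)
  (HCb : forall t, Rabs t <= H -> forall y, norm (T t y) <= C * norm y).

Let kap := C * C * Lf * (1 + LK * C).
Let E := exp (2 * kap * H).
Let Cx := C * E.
Let c1 := C * Lf * (Cx + LK * C * Cx).
Let c2 := C * (H * (C * Lf * LK * c1)) * E.

Lemma period_rate_pos : 0 < kap.
Proof.
  unfold kap. assert (0 <= LK * C) by nra.
  assert (0 < C * C * Lf) by (apply Rmult_lt_0_compat; nra). nra.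
Qed.

Lemma Cx_ge1 : 1 <= Cx.
Proof.
  assert (1 <= E).
  { unfold E. rewrite <- exp_0. apply exp_le_compat. generalize period_rate_pos tau_pos.
    unfold H. nra. }
  unfold Cx. nra.
Qed.

Lemma c1_nonneg : 0 <= c1.
Proof.
  assert (HCx := Cx_ge1).
  assert (0 <= LK * C * Cx) by (apply Rmult_le_pos; [apply Rmult_le_pos|]; lra).
  unfold c1. apply Rmult_le_pos; [apply Rmult_le_pos|]; lra.
Qed.

Lemma C_bound_on_period t y : 0 <= t <= H ->
  norm (T t y) <= C * norm y /\ norm (T (- t) y) <= C * norm y.
Proof. intros Ht. split; apply HCb; [|rewrite Rabs_Ropp]; rewrite Rabs_pos_eq; lra. Qed.

Section Trajectory.
Context (s : nat -> R) (sigma : R -> Q) (x0 : X) (x : R -> X) (delta : R)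
  (Hs : sampling_seq s) (Hgap : forall k, s (S k) - s k <= delta) (HPC : PC sigma)
  (Htraj : sampled_traj T f K s sigma x0 x).

Let V (t : R) : X := T (- t) (x t).
Let last_sample (r : R) : R := s (partition_index s r).

Lemma last_sample_spec r : 0 <= r -> 0 <= last_sample r <= r /\ r - last_sample r <= delta.
Proof.
  intros Hr. destruct (partition_index_spec s r Hs Hr) as [H1 H2].
  generalize (Hgap (partition_index s r)) (partition_nonneg s Hs (partition_index s r)).
  unfold last_sample. lra.
Qed.

Lemma x_of_pullback t : 0 <= t <= H -> norm (x t) <= C * norm (V t).
Proof. intros Ht. replace (x t) with (T t (V t)) by apply (C0_inv T HT).
  apply C_bound_on_period, Ht. Qed.

Lemma sampled_field_bound A r : 0 <= A -> 0 <= r <= H ->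
  (forall r', 0 <= r' <= H -> norm (V r') <= A * exp (2 * kap * r')) ->
  norm (T (- r) (sampled_field T f K s sigma x r)) <= kap * A * exp (2 * kap * r).
Proof.
  intros HA Hr Hb. destruct (last_sample_spec r (proj1 Hr)) as [Hj Hjd].
  set (e := exp (2 * kap * r)). assert (He : 0 < e) by apply exp_pos.
  assert (Hxr : norm (x r) <= C * (A * e)).
  { eapply Rle_trans; [apply x_of_pullback, Hr|]. apply Rmult_le_compat_l; [lra | apply Hb, Hr]. }
  assert (Hxj : norm (x (last_sample r)) <= C * (A * e)).
  { eapply Rle_trans; [apply x_of_pullback; lra|]. apply Rmult_le_compat_l; [lra|].
    eapply Rle_trans; [apply Hb; lra|]. apply Rmult_le_compat_l; [exact HA|].
    apply exp_le_compat. generalize period_rate_pos. nra. }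
  assert (HKj : norm (K (T (r - last_sample r) (x (last_sample r)))) <= LK * (C * (C * (A * e)))).
  { eapply Rle_trans; [apply K_linear_growth|]. apply Rmult_le_compat_l; [exact HLK|].
    eapply Rle_trans; [apply C_bound_on_period; lra|]. apply Rmult_le_compat_l; lra. }
  eapply Rle_trans; [apply C_bound_on_period, Hr|].
  apply Rle_trans with (C * (Lf * (C * (A * e) + LK * (C * (C * (A * e)))))).
  - apply Rmult_le_compat_l; [lra|]. unfold sampled_field. fold (last_sample r).
    eapply Rle_trans; [apply f_linear_growth|]. apply Rmult_le_compat_l; lra.
  - right. unfold kap. ring.
Qed.

Lemma sampled_pullback_bound t : 0 <= t <= H -> norm (V t) <= norm x0 * exp (2 * kap * t).
Proof.
  destruct (bounded_continuity (fun r => x (Rmax 0 r)) 0 H) as [P0 HP0].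
  { intros r _. apply (continuous_on_Rplus_extend x), Htraj. }
  apply (gronwall_iteration (fun t => norm (V t)) H kap (norm x0) (C * P0));
    [exact period_rate_pos | apply norm_ge_0 | |].
  - intros r Hr. apply (Rle_trans _ (C * norm (x r))); [apply C_bound_on_period, Hr|].
    apply Rmult_le_compat_l; [lra|]. generalize (HP0 r Hr). rewrite Rmax_right by lra. lra.
  - intros A HA Hb r Hr.
    assert (Hn : norm (minus (V r) x0) <= kap * A / (2 * kap) * (exp (2 * kap * (r - 0)) - 1)).
    { apply (norm_RInt_le (fun r => T (- r) (sampled_field T f K s sigma x r))
               (fun y => kap * A * exp (2 * kap * (y - 0))) 0 r); [lra| | |].
      - intros y Hy. rewrite Rminus_0_r. apply sampled_field_bound; auto. lra.
      - apply (sampled_pullback_integral T HT HX HI f K Lf LK Hf HK); auto. lra.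
      - apply is_RInt_exp_affine. generalize period_rate_pos. lra. }
    generalize (norm_minus_ge (V r) x0) period_rate_pos. rewrite Rminus_0_r in Hn. intros H1 Hk.
    replace (kap * A / (2 * kap)) with (A / 2) in Hn by (field; lra). lra.
Qed.

Lemma sampled_bound t : 0 <= t <= H -> norm (x t) <= Cx * norm x0.
Proof.
  intros Ht. eapply Rle_trans; [apply x_of_pullback, Ht|]. unfold Cx. rewrite Rmult_assoc.
  apply Rmult_le_compat_l; [lra|]. eapply Rle_trans; [apply sampled_pullback_bound, Ht|].
  rewrite (Rmult_comm E). apply Rmult_le_compat_l; [apply norm_ge_0|].
  unfold E. apply exp_le_compat. generalize period_rate_pos. nra.
Qed.

Lemma sampled_prediction_error r : 0 <= r <= H ->
  norm (minus (x r) (T (r - last_sample r) (x (last_sample r)))) <= delta * (c1 * norm x0).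
Proof.
  intros Hr. destruct (last_sample_spec r (proj1 Hr)) as [Hj Hjd].
  unfold last_sample in *. set (j := partition_index s r) in *.
  destruct (proj2 (proj2 Htraj) j r (partition_index_spec s r Hs (proj1 Hr))) as [I [HI' Hxr]].
  rewrite Hxr, minus_plus_l.
  assert (Hc1 : 0 <= c1 * norm x0)
    by (apply Rmult_le_pos; [apply c1_nonneg | apply norm_ge_0]).
  eapply Rle_trans;
    [apply (norm_RInt_le_const (fun rho => T (r - s j - rho) (f (sigma (rho + s j)) (x (rho + s j))
              (K (T rho (x (s j)))))) 0 (r - s j) I (c1 * norm x0)); [lra| |exact HI']|].
  - intros rho Hrho.
    assert (Hxb : forall u, 0 <= u <= H -> norm (x u) <= Cx * norm x0) by apply sampled_bound.
    eapply Rle_trans; [apply C_bound_on_period; lra|].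
    apply Rle_trans with (C * (Lf * (Cx * norm x0 + LK * (C * (Cx * norm x0)))));
      [|right; unfold c1; ring].
    apply Rmult_le_compat_l; [lra|]. eapply Rle_trans; [apply f_linear_growth|].
    apply Rmult_le_compat_l; [lra|]. apply Rplus_le_compat; [apply Hxb; lra|].
    eapply Rle_trans; [apply K_linear_growth|]. apply Rmult_le_compat_l; [exact HLK|].
    eapply Rle_trans; [apply C_bound_on_period; lra|].
    apply Rmult_le_compat_l; [lra | apply Hxb; lra].
  - apply Rmult_le_compat_r; lra.
Qed.

Lemma delta_pos : 0 < delta.
Proof. generalize (Hgap 0%nat) (proj1 (proj2 Hs) 0%nat). lra. Qed.

Section Comparison.
Context (z : R -> X) (Hz : Sigma0_traj T f K sigma x0 z).

Let Vz (t : R) : X := T (- t) (z t).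
Let a' := C * Lf * LK * delta * c1 * norm x0.

Lemma a'_nonneg : 0 <= a'.
Proof.
  assert (Hd := delta_pos). assert (Hc1 := c1_nonneg).
  unfold a'. apply Rmult_le_pos; [|apply norm_ge_0].
  repeat (apply Rmult_le_pos; [|lra]). lra.
Qed.

Lemma x_minus_z_of_pullback t : 0 <= t <= H ->
  norm (minus (x t) (z t)) <= C * norm (minus (V t) (Vz t)).
Proof.
  intros Ht. replace (minus (x t) (z t)) with (T t (minus (V t) (Vz t))).
  - apply C_bound_on_period, Ht.
  - unfold V, Vz. rewrite (C0_minus T HT), !(C0_inv T HT). reflexivity.
Qed.

Lemma pullback_difference_integrand_bound A r : 0 <= A -> 0 <= r <= H ->
  (forall r', 0 <= r' <= H -> norm (minus (V r') (Vz r')) <= A * exp (2 * kap * r')) ->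
  norm (minus (T (- r) (sampled_field T f K s sigma x r)) (T (- r) (f (sigma r) (z r) (K (z r)))))
    <= kap * A * exp (2 * kap * r) + a'.
Proof.
  intros HA Hr Hb. set (e := exp (2 * kap * r)). assert (He : 0 < e) by apply exp_pos.
  assert (Hxz : norm (minus (x r) (z r)) <= C * (A * e)).
  { eapply Rle_trans; [apply x_minus_z_of_pullback, Hr|].
    apply Rmult_le_compat_l; [lra | apply Hb, Hr]. }
  assert (Hpz : norm (minus (T (r - last_sample r) (x (last_sample r))) (z r))
                  <= delta * (c1 * norm x0) + C * (A * e)).
  { eapply Rle_trans; [apply (norm_minus_triangle _ (x r))|].
    rewrite norm_minus_sym. generalize (sampled_prediction_error r Hr). lra. }
  rewrite <- (C0_minus T HT). eapply Rle_trans; [apply C_bound_on_period, Hr|].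
  apply Rle_trans with (C * (Lf * (C * (A * e) + LK * (delta * (c1 * norm x0) + C * (A * e))))).
  - apply Rmult_le_compat_l; [lra|]. unfold sampled_field. fold (last_sample r).
    eapply Rle_trans; [apply Hf|]. apply Rmult_le_compat_l; [lra|].
    apply Rplus_le_compat; [exact Hxz|].
    eapply Rle_trans; [apply HK | apply Rmult_le_compat_l; lra].
  - (* [C >= 1] absorbs the [LK] term into [kap] *)
    assert (0 <= C * C * Lf * A * e * LK * (C - 1)).
    { repeat (apply Rmult_le_pos; [|lra]). lra. }
    unfold kap, a'. nra.
Qed.

Lemma pullback_difference_bound t : 0 <= t <= H ->
  norm (minus (V t) (Vz t)) <= (H * a') * exp (2 * kap * t).
Proof.
  assert (Hk := period_rate_pos). assert (Ha' := a'_nonneg).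
  assert (HzM : forall t, 0 <= t -> norm (z t) <= M * norm x0).
  { intros r Hr. eapply Rle_trans; [apply (HUGES sigma x0 z HPC Hz r Hr)|].
    apply Rmult_le_compat_r; [apply norm_ge_0|]. rewrite <- (Rmult_1_r M) at 2.
    apply Rmult_le_compat_l; [lra|]. rewrite <- exp_0. apply exp_le_compat. nra. }
  apply (gronwall_iteration (fun t => norm (minus (V t) (Vz t))) H kap (H * a')
           (C * (Cx + M) * norm x0) Hk).
  { apply Rmult_le_pos; [unfold H; generalize tau_pos|]; lra. }
  - intros r Hr. eapply Rle_trans; [apply norm_minus_le|].
    assert (norm (V r) <= C * (Cx * norm x0)).
    { eapply Rle_trans; [apply C_bound_on_period, Hr|]. apply Rmult_le_compat_l; [lra|].
      apply sampled_bound, Hr. }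
    assert (norm (Vz r) <= C * (M * norm x0)).
    { eapply Rle_trans; [apply C_bound_on_period, Hr|]. apply Rmult_le_compat_l; [lra|].
      apply HzM, Hr. }
    lra.
  - intros A HA Hb r Hr.
    assert (Hn : norm (minus (V r) (Vz r))
                   <= kap * A / (2 * kap) * (exp (2 * kap * (r - 0)) - 1) + (r - 0) * a').
    { apply (norm_RInt_le (fun y => minus (T (- y) (sampled_field T f K s sigma x y))
                                          (T (- y) (f (sigma y) (z y) (K (z y)))))
               (fun y => kap * A * exp (2 * kap * (y - 0)) + a') 0 r); [lra| | |].
      - intros y Hy. rewrite Rminus_0_r. apply pullback_difference_integrand_bound; auto. lra.
      - rewrite <- (minus_minus_r (V r) (Vz r) x0). apply is_RInt_minus.
        + apply (sampled_pullback_integral T HT HX HI f K Lf LK Hf HK); auto. lra.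
        + apply (Sigma0_pullback_integral T HT f K sigma x0 z Hz). lra.
      - apply (is_RInt_plus (fun y => kap * A * exp (2 * kap * (y - 0))) (fun _ => a'));
        [apply is_RInt_exp_affine; lra | exact (is_RInt_const (V := R_NormedModule) 0 r a')]. }
    rewrite Rminus_0_r in Hn. replace (kap * A / (2 * kap)) with (A / 2) in Hn by (field; lra).
    assert (r * a' <= H * a') by (apply Rmult_le_compat_r; lra). lra.
Qed.

End Comparison.

Lemma sampled_Sigma0_distance z : Sigma0_traj T f K sigma x0 z -> forall t, 0 <= t <= H ->
  norm (minus (x t) (z t)) <= delta * c2 * norm x0.
Proof.
  intros Hz t Ht. assert (Ha' := a'_nonneg).
  eapply Rle_trans; [apply (x_minus_z_of_pullback z), Ht|].
  apply Rle_trans with (C * ((H * (C * Lf * LK * delta * c1 * norm x0)) * E));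
    [|right; unfold c2; ring].
  apply Rmult_le_compat_l; [lra|]. eapply Rle_trans; [apply (pullback_difference_bound z Hz), Ht|].
  apply Rmult_le_compat_l; [apply Rmult_le_pos; [unfold H; generalize tau_pos|]; lra|].
  unfold E. apply exp_le_compat. generalize period_rate_pos. nra.
Qed.

(* Compare with the trajectory of [Sigma0] with the same data, which has decayed below [1/4]. *)
Lemma sampled_halves : delta * c2 <= / 4 -> forall t, tau <= t <= H -> norm (x t) <= / 2 * norm x0.
Proof.
  intros Hdc2 t Ht.
  destruct (Sigma0_traj_exists T HT f K Lf LK HLf HLK Hf Hf0 HK HK0 HX HI HU sigma x0 HPC)
    as [z Hz].
  assert (Htau := tau_pos).
  assert (Hzt : norm (z t) <= / 4 * norm x0).
  { eapply Rle_trans; [apply (HUGES sigma x0 z HPC Hz); lra|].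
    apply Rmult_le_compat_r; [apply norm_ge_0|]. eapply Rle_trans; [|apply Sigma0_decay_tau].
    apply Rmult_le_compat_l; [lra|]. apply exp_le_compat. nra. }
  assert (Hxz := sampled_Sigma0_distance z Hz t ltac:(unfold H in *; lra)).
  assert (delta * c2 * norm x0 <= / 4 * norm x0)
    by (apply Rmult_le_compat_r; [apply norm_ge_0 | exact Hdc2]).
  generalize (norm_minus_ge (x t) (z t)). lra.
Qed.

End Trajectory.

Lemma c2_nonneg : 0 <= c2.
Proof.
  assert (Htau := tau_pos). assert (Hc1 := c1_nonneg).
  assert (0 <= C * Lf * LK * c1) by (repeat (apply Rmult_le_pos; [|lra]); lra).
  unfold c2, E. apply Rmult_le_pos; [|apply Rlt_le, exp_pos].
  apply Rmult_le_pos; [lra|]. apply Rmult_le_pos; [unfold H|]; lra.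
Qed.

Lemma sampled_one_period_constants : exists Cx' ds, 1 <= Cx' /\ 0 < ds <= 1 /\
  forall s sigma x0 x delta, sampling_seq s -> delta <= ds -> (forall k, s (S k) - s k <= delta) ->
    PC sigma -> sampled_traj T f K s sigma x0 x ->
    (forall t, 0 <= t <= H -> norm (x t) <= Cx' * norm x0) /\
    (forall t, tau <= t <= H -> norm (x t) <= / 2 * norm x0).
Proof.
  assert (Hc2 := c2_nonneg).
  exists Cx, (Rmin 1 (/ (4 * (c2 + 1)))). split; [apply Cx_ge1|]. split.
  { split; [apply Rmin_pos; [lra | apply Rinv_0_lt_compat; lra] | apply Rmin_l]. }
  intros s sigma x0 x delta Hs Hd Hgap HPC Htraj. split.
  - intros t Ht. apply (sampled_bound s sigma x0 x delta); auto.
  - apply (sampled_halves s sigma x0 x delta); auto.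
    assert (delta <= / (4 * (c2 + 1))) by (eapply Rle_trans; [exact Hd | apply Rmin_r]).
    apply Rle_trans with (/ (4 * (c2 + 1)) * c2); [apply Rmult_le_compat_r; lra|].
    apply Rmult_le_reg_l with (4 * (c2 + 1)); [lra|]. rewrite <- Rmult_assoc, Rinv_r by lra. lra.
Qed.

End Constants.

Lemma sampled_one_period : exists tau Cx ds, 0 < tau /\ 1 <= Cx /\ 0 < ds <= 1 /\
  forall s sigma x0 x delta, sampling_seq s -> delta <= ds -> (forall k, s (S k) - s k <= delta) ->
    PC sigma -> sampled_traj T f K s sigma x0 x ->
    (forall t, 0 <= t <= tau + 1 -> norm (x t) <= Cx * norm x0) /\
    (forall t, tau <= t <= tau + 1 -> norm (x t) <= / 2 * norm x0).
Proof.
  destruct (C0_local_bound T HT HX H) as [C [HC1 HCb]].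
  destruct (sampled_one_period_constants C HC1 HCb) as [Cx [ds [HCx [Hds Hest]]]].
  exists tau, Cx, ds. split; [apply tau_pos | auto].
Qed.

End OnePeriod.

Lemma PC_shift {Q : Type} (sigma : R -> Q) a : PC sigma -> 0 <= a -> PC (fun r => sigma (r + a)).
Proof.
  intros [ts [Hts Hconst]] Ha. destruct (partition_index_exists ts Hts a Ha) as [m [Hm1 Hm2]].
  destruct Hts as [H0 [Hinc Hunb]].
  exists (fun i => match i with O => 0 | S i' => ts (m + S i')%nat - a end).
  split; [split; [|split]|].
  - reflexivity.
  - intros [|i]; simpl.
    + replace (m + 1)%nat with (S m) by lia. lra.
    + replace (m + S (S i))%nat with (S (m + S i)) by lia. generalize (Hinc (m + S i)%nat). lra.
  - intros B. destruct (Hunb (B + a)) as [k Hk]. exists (S k).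
    assert (ts k <= ts (m + S k)%nat)
      by (apply (partition_le ts (conj H0 (conj Hinc Hunb))); lia). lra.
  - intros [|i] t Ht; simpl in *.
    + replace (m + 1)%nat with (S m) in Ht by lia.
      rewrite Rplus_0_l, (Hconst m (t + a)), (Hconst m a) by lra. reflexivity.
    + replace (m + S (S i))%nat with (S (m + S i)) in Ht by lia.
      rewrite (Hconst (m + S i)%nat (t + a)) by lra. f_equal. ring.
Qed.

Lemma sampling_shift s k : sampling_seq s -> sampling_seq (fun i => s (k + i)%nat - s k).
Proof.
  intros Hs. destruct Hs as [H0 [Hinc Hunb]]. split; [|split].
  - rewrite Nat.add_0_r. ring.
  - intros i. replace (k + S i)%nat with (S (k + i)) by lia. generalize (Hinc (k + i)%nat). lra.
  - intros B. destruct (Hunb (B + s k)) as [n Hn]. exists n.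
    assert (s n <= s (k + n)%nat) by (apply (partition_le s (conj H0 (conj Hinc Hunb))); lia). lra.
Qed.

Lemma sampled_traj_shift {X U : NormedModule R_AbsRing} (T : R -> X -> X) {Q : Type}
  (f : Q -> X -> U -> X) (K : X -> U) s sigma x0 x k :
  sampling_seq s -> sampled_traj T f K s sigma x0 x ->
  sampled_traj T f K (fun i => s (k + i)%nat - s k) (fun r => sigma (r + s k)) (x (s k))
    (fun t => x (t + s k)).
Proof.
  intros Hs [Hx0 [Hxc Hxf]]. assert (Hsk := partition_nonneg s Hs k). split; [|split].
  - simpl. rewrite Rplus_0_l. reflexivity.
  - intros t Ht. apply (proj2 (filterlim_locally_ball_norm _ _)). intros eps.
    assert (Hc := Hxc (t + s k) ltac:(lra)).
    apply filterlim_locally_ball_norm with (eps := eps) in Hc. destruct Hc as [d Hd].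
    exists d. intros y Hy Hy0. apply Hd; [|simpl; lra].
    change (Rabs (y + s k - (t + s k)) < d).
    replace (y + s k - (t + s k)) with (y - t) by ring. exact Hy.
  - intros i t Ht. replace (k + S i)%nat with (S (k + i)) in Ht by lia.
    destruct (Hxf (k + i)%nat (t + s k)) as [I [HI Hxt]]; [lra|].
    replace (t - (s (k + i)%nat - s k)) with (t + s k - s (k + i)%nat) by ring.
    replace (s (k + i)%nat - s k + s k) with (s (k + i)%nat) by ring.
    exists I. split; [|exact Hxt].
    eapply is_RInt_ext; [|exact HI]. intros r _.
    replace (r + (s (k + i)%nat - s k) + s k) with (r + s (k + i)%nat) by ring. reflexivity.
Qed.

Section Halving.
Context {X : NormedModule R_AbsRing} (traj : X -> (R -> X) -> Prop) (tau C0 : R)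
  (Htau : 0 < tau) (HC0 : 1 <= C0)
  (Hbound : forall x0 x, traj x0 x -> forall t, 0 <= t <= tau + 1 -> norm (x t) <= C0 * norm x0)
  (Hrestart : forall x0 x, traj x0 x -> exists j, tau <= j <= tau + 1 /\
     norm (x j) <= / 2 * norm x0 /\ traj (x j) (fun t => x (t + j))).

Let lam := ln 2 / (tau + 1).

Lemma halving_rate_pos : 0 < lam.
Proof. apply Rdiv_lt_0_compat; [rewrite <- ln_1; apply ln_increasing|]; lra. Qed.

Lemma halving_rate_growth u : 0 <= u <= tau + 1 -> exp (lam * u) <= 2.
Proof.
  intros Hu. rewrite <- (exp_ln 2) by lra. apply exp_le_compat.
  apply Rle_trans with (lam * (tau + 1)).
  { apply Rmult_le_compat_l; [apply Rlt_le, halving_rate_pos | lra]. }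
  right. unfold lam. field. lra.
Qed.

(* The factor [2] absorbs the possible growth within one period. *)
Lemma halving_first_period x0 x t : traj x0 x -> 0 <= t <= tau + 1 ->
  norm (x t) <= 2 * C0 * exp (- lam * t) * norm x0.
Proof.
  intros Hx Ht. eapply Rle_trans; [apply (Hbound x0 x Hx t Ht)|].
  apply Rmult_le_compat_r; [apply norm_ge_0|].
  assert (exp (lam * t) * exp (- lam * t) = 1) by (rewrite <- exp_plus, <- exp_0; f_equal; ring).
  generalize (halving_rate_growth t Ht) (exp_pos (- lam * t)) (exp_pos (lam * t)). nra.
Qed.

Lemma halving_decay_upto n x0 x t : traj x0 x -> 0 <= t <= INR n * tau ->
  norm (x t) <= 2 * C0 * exp (- lam * t) * norm x0.
Proof.
  revert x0 x t. induction n as [|n IH]; intros x0 x t Hx Ht.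
  all: destruct (Rle_or_lt t (tau + 1)) as [Hle|Hgt]; [apply halving_first_period; auto; lra|].
  - simpl in Ht. lra.
  - destruct (Hrestart x0 x Hx) as [j [Hj [Hxj Hshift]]].
    assert (IHt := IH _ _ (t - j) Hshift ltac:(rewrite S_INR in Ht; lra)).
    simpl in IHt. replace (t - j + j) with t in IHt by ring.
    eapply Rle_trans; [exact IHt|].
    replace (exp (- lam * (t - j))) with (exp (- lam * t) * exp (lam * j))
      by (rewrite <- exp_plus; f_equal; ring).
    assert (exp (lam * j) * norm (x j) <= norm x0).
    { apply Rle_trans with (2 * (/ 2 * norm x0)); [|lra].
      apply Rmult_le_compat;
        [apply Rlt_le, exp_pos | apply norm_ge_0 | apply halving_rate_growth; lra | exact Hxj]. }
    replace (2 * C0 * (exp (- lam * t) * exp (lam * j)) * norm (x j))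
      with (2 * C0 * exp (- lam * t) * (exp (lam * j) * norm (x j))) by ring.
    apply Rmult_le_compat_l; [generalize (exp_pos (- lam * t)); nra | auto].
Qed.

Lemma exp_decay_of_halving x0 x : traj x0 x -> forall t, 0 <= t ->
  norm (x t) <= 2 * C0 * exp (- (ln 2 / (tau + 1)) * t) * norm x0.
Proof.
  intros Hx t Ht. destruct (INR_unbounded (t / tau)) as [n Hn].
  apply (halving_decay_upto n); [exact Hx|]. split; [exact Ht|].
  apply Rlt_le, Rmult_lt_reg_r with (/ tau); [apply Rinv_0_lt_compat; lra|].
  rewrite Rmult_assoc, Rinv_r, Rmult_1_r by lra. exact Hn.
Qed.

End Halving.

Theorem sampled_UGES {X U : NormedModule R_AbsRing} (T : R -> X -> X) (Q : Type)
  (f : Q -> X -> U -> X) (K : X -> U) (Lf : R) :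
  seq_complete X -> continuous_integrable X -> RInt_unif_closed X ->
  C0_group T -> 0 < Lf ->
  (forall q x u x' u',
     norm (minus (f q x u) (f q x' u')) <= Lf * (norm (minus x x') + norm (minus u u'))) ->
  (forall q, f q zero zero = zero) -> globally_lipschitz K -> K zero = zero ->
  UGES (Sigma0_traj T f K) ->
  exists dstar : R, 0 < dstar /\
    forall s : nat -> R, sampling_seq s ->
      (exists delta : R, delta < dstar /\ forall k, s (S k) - s k <= delta) ->
      UGES (sampled_traj T f K s).
Proof.
  intros HX HI HU HT HLf Hf Hf0 [LK0 HLK0] HK0 [M [lam [HM [Hlam HUG]]]].
  set (LK := Rmax LK0 0). assert (HLK : 0 <= LK) by apply Rmax_r.
  assert (HK : forall x y, norm (minus (K x) (K y)) <= LK * norm (minus x y)).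
  { intros x y. eapply Rle_trans; [apply HLK0|].
    apply Rmult_le_compat_r; [apply norm_ge_0 | apply Rmax_l]. }
  destruct (sampled_one_period T HT HX HI HU f K Lf LK HLf HLK Hf Hf0 HK HK0 M lam HM Hlam HUG)
    as [tau [C0 [ds [Htau [HC0 [Hds Hest]]]]]].
  exists ds. split; [apply Hds|]. intros s Hs [delta [Hdelta Hgap]].
  set (traj := fun x0 x => exists s' sigma, sampling_seq s' /\ (forall k,
    s' (S k) - s' k <= delta) /\
                 PC sigma /\ sampled_traj T f K s' sigma x0 x).
  exists (2 * C0), (ln 2 / (tau + 1)). split; [lra|].
  split; [apply Rdiv_lt_0_compat; [rewrite <- ln_1; apply ln_increasing|]; lra|].
  intros sigma x0 x HPC Hx t Ht. refine (exp_decay_of_halving traj tau C0 Htau HC0 _ _ x0 x _ t Ht);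
    [| |exists s, sigma; auto].
  - intros x0' x' [s' [sg [Hs' [Hg' [HPC' Hx']]]]].
    exact (proj1 (Hest s' sg x0' x' delta Hs' (Rlt_le _ _ Hdelta) Hg' HPC' Hx')).
  - intros x0' x' [s' [sg [Hs' [Hg' [HPC' Hx']]]]].
    destruct (partition_index_left s' Hs' tau Htau) as [m [Hm1 Hm2]].
    exists (s' (S m)). assert (Hj : tau <= s' (S m) <= tau + 1) by (generalize (Hg' m); lra).
    split; [exact Hj|]. split.
    + exact (proj2 (Hest s' sg x0' x' delta Hs' (Rlt_le _ _ Hdelta) Hg' HPC' Hx') _ Hj).
    + exists (fun i => s' (S m + i)%nat - s' (S m)), (fun r => sg (r + s' (S m))).
      split; [apply sampling_shift, Hs'|]. split.
      * intros k. replace (S m + S k)%nat with (S (S m + k)) by lia.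
        generalize (Hg' (S m + k)%nat). lra.
      * split; [apply PC_shift;
        [exact HPC' | lra] | exact (sampled_traj_shift T f K s' sg x0' x' (S m) Hs' Hx')].
Qed.

Theorem corollary2 (X U : CompleteNormedModule R_AbsRing) (T : R -> X -> X)
  (Q : Type) (f : Q -> X -> U -> X) (K : X -> U) (Lf : R) :
  C0_group T ->
  inhabited Q ->
  0 < Lf ->
  (forall q x u x' u',
     norm (minus (f q x u) (f q x' u')) <= Lf * (norm (minus x x') + norm (minus u u'))) ->
  (forall q, f q zero zero = zero) ->
  globally_lipschitz K ->
  K zero = zero ->
  UGES (Sigma0_traj T f K) ->
  exists dstar : R, 0 < dstar /\
    forall s : nat -> R, sampling_seq s ->
      (exists delta : R, delta < dstar /\ forall k, s (S k) - s k <= delta) ->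
      UGES (sampled_traj T f K s).
Proof.
  intros HT _.
  apply (sampled_UGES T Q f K Lf (complete_seq_complete X) (complete_continuous_integrable X)
           (complete_RInt_unif_closed X) HT).
Qed.
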